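(* Let $H_1,\dots,H_n$ be symmetric operators on a Hilbert space $\mathcal H$ with common dense domain $\mathcal D$, let $I\subset\mathbb R$ be an interval, and let $f_i,g_i\in C^1(I)$ real-valued, $i=1,\dots,n$. Suppose that $H^{(1)}(t)=\sum_i f_i(t)H_i$ and $H^{(2)}(t)=\sum_i g_i(t)H_i$, both with domain $\mathcal D$, satisfy hypotheses (i)–(iii) below, and let $U_1(t,s)$, $U_2(t,s)$ be the associated unitary propagators (whose existence is guaranteed under these hypotheses, with $U_k(t,s)\Psi$ strongly differentiable in $t$ and solving $\frac{d}{dt}\Psi(t)=-iH^{(k)}(t)\Psi(t)$ for $\Psi(s)\in\mathcal D$). Then for every $\Psi\in\mathcal D$, every $s<T$ in $I$ and every $\varepsilon>0$ there exists $\delta>0$ such that $\max_i\|f_i-g_i\|_\infty<\delta$ implies \[\|U_1(T,s)\Psi-U_2(T,s)\Psi\|<\varepsilon.\]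
   Context: Hypotheses for $H(t)=\sum_i f_i(t)H_i$ on domain $\mathcal D$: (i) $H(t)$ is self-adjoint for all $t\in I$; (ii) $f_i\in C^1(I)$; (iii) for every $i$ there is $K>0$ independent of $t$ with $\|H_i\Psi\|\le K(\|H(t)\Psi\|+\|\Psi\|)$ for all $\Psi\in\mathcal D$, $t\in I$. A unitary propagator is a family of unitaries $U(t,s)$ with $U(r,s)U(s,t)=U(r,t)$, $U(t,t)=\mathrm{Id}$, jointly strongly continuous. $\|\cdot\|_\infty$ is the sup norm on $I$. *)

From Stdlib Require Import Reals Lra.
Open Scope R_scope.

Record C := mkC { Re : R; Im : R }.
Definition Cadd (z w : C) : C := mkC (Re z + Re w) (Im z + Im w).
Definition Cmul (z w : C) : C :=
  mkC (Re z * Re w - Im z * Im w) (Re z * Im w + Im z * Re w).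
Definition Cconj (z : C) : C := mkC (Re z) (- Im z).
Definition Cof (x : R) : C := mkC x 0.
Definition Ci : C := mkC 0 1.

(** * Complex Hilbert spaces
    inner product: conjugate-linear in the first, linear in the second argument. *)
Record HilbertSpace := {
  hcarrier :> Type;
  vzero : hcarrier;
  vadd : hcarrier -> hcarrier -> hcarrier;
  vopp : hcarrier -> hcarrier;
  vscal : C -> hcarrier -> hcarrier;
  inner : hcarrier -> hcarrier -> C;
  vadd_assoc : forall x y z, vadd x (vadd y z) = vadd (vadd x y) z;
  vadd_comm : forall x y, vadd x y = vadd y x;
  vadd_0 : forall x, vadd x vzero = x;
  vadd_opp : forall x, vadd x (vopp x) = vzero;
  vscal_1 : forall x, vscal (Cof 1) x = x;
  vscal_assoc : forall a b x, vscal a (vscal b x) = vscal (Cmul a b) x;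
  vscal_distr_v : forall a x y, vscal a (vadd x y) = vadd (vscal a x) (vscal a y);
  vscal_distr_c : forall a b x, vscal (Cadd a b) x = vadd (vscal a x) (vscal b x);
  inner_conj : forall x y, inner x y = Cconj (inner y x);
  inner_add_r : forall x y z, inner x (vadd y z) = Cadd (inner x y) (inner x z);
  inner_scal_r : forall a x y, inner x (vscal a y) = Cmul a (inner x y);
  inner_pos : forall x, 0 <= Re (inner x x);
  inner_def : forall x, Re (inner x x) = 0 -> x = vzero;
  complete : forall u : nat -> hcarrier,
    (forall eps, 0 < eps -> exists N, forall m k, (N <= m)%nat -> (N <= k)%nat ->
        sqrt (Re (inner (vadd (u m) (vopp (u k))) (vadd (u m) (vopp (u k))))) < eps) ->
    exists l, forall eps, 0 < eps -> exists N, forall m, (N <= m)%nat ->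
        sqrt (Re (inner (vadd (u m) (vopp l)) (vadd (u m) (vopp l)))) < eps
}.

Arguments vzero {_}. Arguments vadd {_}. Arguments vopp {_}.
Arguments vscal {_}. Arguments inner {_}.

Section Ops.
Variable Hs : HilbertSpace.

Definition vsub (x y : Hs) : Hs := vadd x (vopp y).
Definition vnorm (x : Hs) : R := sqrt (Re (inner x x)).

Fixpoint vsum (n : nat) (F : nat -> Hs) : Hs :=
  match n with O => vzero | S m => vadd (vsum m F) (F m) end.

Definition subspace (D : Hs -> Prop) : Prop :=
  D vzero /\ (forall x y, D x -> D y -> D (vadd x y)) /\
  (forall a x, D x -> D (vscal a x)).

Definition dense (D : Hs -> Prop) : Prop :=
  forall x eps, 0 < eps -> exists y, D y /\ vnorm (vsub x y) < eps.

Definition linear_on (D : Hs -> Prop) (A : Hs -> Hs) : Prop :=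
  forall a x y, D x -> D y -> A (vadd (vscal a x) y) = vadd (vscal a (A x)) (A y).

Definition symmetric_op (D : Hs -> Prop) (A : Hs -> Hs) : Prop :=
  subspace D /\ dense D /\ linear_on D A /\
  forall x y, D x -> D y -> inner (A x) y = inner x (A y).

(** self-adjoint: symmetric and A* = A, i.e. dom(A* ) is contained in D and
    A* phi = A phi (dom(A* ) = {phi | exists eta, forall psi in D,
    <phi, A psi> = <eta, psi>}, A* phi = eta). *)
Definition self_adjoint (D : Hs -> Prop) (A : Hs -> Hs) : Prop :=
  symmetric_op D A /\
  forall phi eta, (forall psi, D psi -> inner phi (A psi) = inner eta psi) ->
    D phi /\ eta = A phi.

Definition Hsum (n : nat) (f : nat -> R -> R) (Hop : nat -> Hs -> Hs)
  (t : R) (x : Hs) : Hs :=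
  vsum n (fun i => vscal (Cof (f i t)) (Hop i x)).

Definition hyp_i (I : R -> Prop) (D : Hs -> Prop) (n : nat)
  (f : nat -> R -> R) (Hop : nat -> Hs -> Hs) : Prop :=
  forall t, I t -> self_adjoint D (Hsum n f Hop t).

Definition hyp_iii (I : R -> Prop) (D : Hs -> Prop) (n : nat)
  (f : nat -> R -> R) (Hop : nat -> Hs -> Hs) : Prop :=
  forall i, (i < n)%nat -> exists K, 0 < K /\
    forall x t, D x -> I t ->
      vnorm (Hop i x) <= K * (vnorm (Hsum n f Hop t x) + vnorm x).

Definition unitary_propagator (I : R -> Prop) (U : R -> R -> Hs -> Hs) : Prop :=
  (forall t s, I t -> I s ->
     (forall a x y, U t s (vadd (vscal a x) y) = vadd (vscal a (U t s x)) (U t s y)) /\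
     (forall x y, inner (U t s x) (U t s y) = inner x y) /\
     (forall y, exists x, U t s x = y)) /\
  (forall r s t x, I r -> I s -> I t -> U r s (U s t x) = U r t x) /\
  (forall t x, I t -> U t t x = x) /\
  (forall x t s, I t -> I s -> forall eps, 0 < eps -> exists d, 0 < d /\
     forall t' s', I t' -> I s' -> Rabs (t' - t) < d -> Rabs (s' - s) < d ->
       vnorm (vsub (U t' s' x) (U t s x)) < eps).

Definition has_vderiv_in (I : R -> Prop) (F : R -> Hs) (t : R) (v : Hs) : Prop :=
  forall eps, 0 < eps -> exists d, 0 < d /\
    forall h, h <> 0 -> I (t + h) -> Rabs h < d ->
      vnorm (vsub (vscal (Cof (/ h)) (vsub (F (t + h)) (F t))) v) < eps.

Definition solves (I : R -> Prop) (D : Hs -> Prop) (H : R -> Hs -> Hs)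
  (U : R -> R -> Hs -> Hs) : Prop :=
  forall s x, I s -> D x ->
    (forall t, I t -> D (U t s x)) /\
    (forall t, I t -> has_vderiv_in I (fun r => U r s x) t
                        (vscal (mkC 0 (-1)) (H t (U t s x)))).

Definition propagator_of (I : R -> Prop) (D : Hs -> Prop) (n : nat)
  (f : nat -> R -> R) (Hop : nat -> Hs -> Hs) (U : R -> R -> Hs -> Hs) : Prop :=
  unitary_propagator I U /\ solves I D (Hsum n f Hop) U.

End Ops.

Arguments vsub {_}. Arguments vnorm {_}.

Definition is_interval (I : R -> Prop) : Prop :=
  forall a b c, I a -> I c -> a <= b -> b <= c -> I b.

Definition C1_on (I : R -> Prop) (f : R -> R) : Prop :=
  exists f' : R -> R,
    (forall t, I t -> forall eps, 0 < eps -> exists d, 0 < d /\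
       forall h, h <> 0 -> I (t + h) -> Rabs h < d ->
         Rabs ((f (t + h) - f t) / h - f' t) < eps) /\
    (forall t, I t -> forall eps, 0 < eps -> exists d, 0 < d /\
       forall u, I u -> Rabs (u - t) < d -> Rabs (f' u - f' t) < eps).

Definition sup_close (I : R -> Prop) (n : nat) (f g : nat -> R -> R) (delta : R) : Prop :=
  exists c, c < delta /\
    forall i t, (i < n)%nat -> I t -> Rabs (f i t - g i t) <= c.

(* Write phi_k(t) = U_k(t,s) Psi.  The derivative of |phi_1 - phi_2|^2 is
   2 Im <phi_1 - phi_2, (H_f(t) - H_g(t)) phi_1(t)>: the H_g-part drops out because H_g(t) is
   symmetric.  As |phi_1 - phi_2| <= 2 |Psi|, by (iii) this is at most a constant times
   max_i |f_i - g_i|_oo times (|H_f(t) phi_1(t)| + |Psi|), so everything reduces to a bound for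
   |H(t) phi(t)| on [s, T].

   For xi in D, r |-> Re <U(r,y) xi, H(r) phi(r)> is differentiable with derivative
   sum_i f_i'(r) Re <H_i U(r,y) xi, phi(r)> as long as |H(r) phi(r)| stays bounded near r.
   Taking r = y and testing against a dense set of xi gives, on every short interval where some
   bound holds, |H(y) phi(y)| <= 2 |H(x) phi(x)| + |Psi|.  The points near which |H phi| is not
   bounded form a closed set on which |H phi| is lower semicontinuous; Baire's theorem and the
   previous estimate show that this set is empty, and compactness of [s, T] gives the bound. *)

From Pilot Require Import Defs.
From Stdlib Require Import Reals Lra Psatz ZArith Classical ClassicalEpsilon.
Open Scope R_scope.

(** * Hilbert space algebra *)

Lemma C_ext (z w : Defs.C) : Re z = Re w -> Im z = Im w -> z = w.
Proof. destruct z, w; simpl; intros; subst; reflexivity. Qed.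

Section HilbertAlgebra.
Context {Hs : HilbertSpace}.

Lemma vadd_0_l (x : Hs) : vadd vzero x = x.
Proof. rewrite vadd_comm; apply vadd_0. Qed.

Lemma vadd_opp_l (x : Hs) : vadd (vopp x) x = vzero.
Proof. rewrite vadd_comm; apply vadd_opp. Qed.

Lemma vopp_unique (x y : Hs) : vadd x y = vzero -> y = vopp x.
Proof.
  intro H. rewrite <- (vadd_0 _ y), <- (vadd_opp _ x), vadd_assoc, (vadd_comm _ y x), H.
  apply vadd_0_l.
Qed.

Lemma vadd_cancel_r (x y z : Hs) : vadd x z = vadd y z -> x = y.
Proof.
  intro H. rewrite <- (vadd_0 _ x), <- (vadd_0 _ y), <- (vadd_opp _ z), !vadd_assoc, H.
  reflexivity.
Qed.

Lemma vscal_0 (x : Hs) : vscal (Cof 0) x = vzero.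
Proof.
  apply (vadd_cancel_r _ _ (vscal (Cof 0) x)).
  rewrite vadd_0_l, <- vscal_distr_c. f_equal. apply C_ext; simpl; ring.
Qed.

Lemma vopp_scal (x : Hs) : vopp x = vscal (Cof (-1)) x.
Proof.
  symmetry. apply vopp_unique. rewrite <- (vscal_1 _ x) at 1.
  rewrite <- vscal_distr_c, <- (vscal_0 x). f_equal. apply C_ext; simpl; ring.
Qed.

Lemma vscal_zero (a : Defs.C) : vscal a (@vzero Hs) = vzero.
Proof.
  rewrite <- (vscal_0 vzero) at 2. rewrite <- (vscal_0 vzero) at 1.
  rewrite vscal_assoc. f_equal. apply C_ext; simpl; ring.
Qed.

Lemma vopp_zero : vopp (@vzero Hs) = vzero.
Proof. rewrite vopp_scal. apply vscal_zero. Qed.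

Lemma vopp_add (x y : Hs) : vopp (vadd x y) = vadd (vopp x) (vopp y).
Proof. rewrite !vopp_scal, vscal_distr_v. reflexivity. Qed.

Lemma vopp_opp (x : Hs) : vopp (vopp x) = x.
Proof.
  rewrite !vopp_scal, vscal_assoc. rewrite <- (vscal_1 _ x) at 2.
  f_equal. apply C_ext; simpl; ring.
Qed.

Lemma vscal_opp (a : Defs.C) (x : Hs) : vscal a (vopp x) = vopp (vscal a x).
Proof. rewrite !vopp_scal, !vscal_assoc. f_equal. apply C_ext; simpl; ring. Qed.

Lemma vsub_diag (x : Hs) : vsub x x = vzero.
Proof. apply vadd_opp. Qed.

Lemma vsub_add3 (x y z : Hs) : vsub x z = vadd (vsub x y) (vsub y z).
Proof.
  unfold vsub. rewrite <- vadd_assoc, (vadd_assoc _ (vopp y)), vadd_opp_l, vadd_0_l.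
  reflexivity.
Qed.

Lemma vsub_vadd (a b c d : Hs) : vsub (vadd a b) (vadd c d) = vadd (vsub a c) (vsub b d).
Proof.
  unfold vsub. rewrite vopp_add, <- !vadd_assoc. f_equal.
  rewrite !vadd_assoc. f_equal. apply vadd_comm.
Qed.

Lemma vsub_sub4 (a b c d : Hs) : vsub (vsub a b) (vsub c d) = vsub (vsub a c) (vsub b d).
Proof.
  unfold vsub. rewrite !vopp_add, !vopp_opp, <- !vadd_assoc. f_equal.
  rewrite !vadd_assoc. f_equal. apply vadd_comm.
Qed.

Lemma vscal_sub a (x y : Hs) : vscal a (vsub x y) = vsub (vscal a x) (vscal a y).
Proof. unfold vsub. rewrite vscal_distr_v, vscal_opp. reflexivity. Qed.

Lemma vsub_scalR a b (x : Hs) : vsub (vscal (Cof a) x) (vscal (Cof b) x) = vscal (Cof (a - b)) x.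
Proof.
  unfold vsub. rewrite vopp_scal, vscal_assoc, <- vscal_distr_c. f_equal.
  apply C_ext; simpl; ring.
Qed.

Lemma vscal_inv_cancel h (x : Hs) : h <> 0 -> vscal (Cof h) (vscal (Cof (/ h)) x) = x.
Proof.
  intro Hh. rewrite vscal_assoc. rewrite <- (vscal_1 _ x) at 2.
  f_equal. apply C_ext; simpl; field; auto.
Qed.

Lemma inner_add_l (x y z : Hs) : inner (vadd x y) z = Cadd (inner x z) (inner y z).
Proof.
  rewrite inner_conj, inner_add_r, (inner_conj _ z x), (inner_conj _ z y).
  apply C_ext; simpl; ring.
Qed.

Lemma inner_scal_l (a : Defs.C) (x y : Hs) : inner (vscal a x) y = Cmul (Cconj a) (inner x y).
Proof.
  rewrite inner_conj, inner_scal_r, (inner_conj _ y x). destruct a; apply C_ext; simpl; ring.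
  
Qed.

Lemma inner_zero_r (x : Hs) : inner x vzero = Cof 0.
Proof. rewrite <- (vscal_0 x), inner_scal_r. apply C_ext; simpl; ring. Qed.

Lemma inner_zero_l (x : Hs) : inner vzero x = Cof 0.
Proof. rewrite inner_conj, inner_zero_r. apply C_ext; simpl; ring. Qed.

Lemma inner_opp_r (x y : Hs) : inner x (vopp y) = Cmul (Cof (-1)) (inner x y).
Proof. rewrite vopp_scal, inner_scal_r. reflexivity. Qed.

Lemma inner_opp_l (x y : Hs) : inner (vopp x) y = Cmul (Cof (-1)) (inner x y).
Proof. rewrite vopp_scal, inner_scal_l. apply C_ext; simpl; ring. Qed.

Lemma Re_inner_sym (x y : Hs) : Re (inner x y) = Re (inner y x).
Proof. rewrite inner_conj. reflexivity. Qed.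

Lemma Im_inner_sym (x y : Hs) : Im (inner x y) = - Im (inner y x).
Proof. rewrite inner_conj. reflexivity. Qed.

Lemma Im_inner_self (x : Hs) : Im (inner x x) = 0.
Proof. pose proof (Im_inner_sym x x). lra. Qed.

Lemma Re_inner_add_r (x y z : Hs) : Re (inner x (vadd y z)) = Re (inner x y) + Re (inner x z).
Proof. rewrite inner_add_r. reflexivity. Qed.

Lemma Re_inner_add_l (x y z : Hs) : Re (inner (vadd x y) z) = Re (inner x z) + Re (inner y z).
Proof. rewrite inner_add_l. reflexivity. Qed.

Lemma Im_inner_add_r (x y z : Hs) : Im (inner x (vadd y z)) = Im (inner x y) + Im (inner x z).
Proof. rewrite inner_add_r. reflexivity. Qed.

Lemma Re_inner_sub_r (x y z : Hs) : Re (inner x (vsub y z)) = Re (inner x y) - Re (inner x z).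
Proof. unfold vsub. rewrite inner_add_r, inner_opp_r. simpl. ring. Qed.

Lemma Re_inner_sub_l (x y z : Hs) : Re (inner (vsub x y) z) = Re (inner x z) - Re (inner y z).
Proof. unfold vsub. rewrite inner_add_l, inner_opp_l. simpl. ring. Qed.

Lemma Im_inner_sub_r (x y z : Hs) : Im (inner x (vsub y z)) = Im (inner x y) - Im (inner x z).
Proof. unfold vsub. rewrite inner_add_r, inner_opp_r. simpl. ring. Qed.

Lemma Re_inner_scal_r (a : Defs.C) (x y : Hs) :
  Re (inner x (vscal a y)) = Re a * Re (inner x y) - Im a * Im (inner x y).
Proof. rewrite inner_scal_r. reflexivity. Qed.

Lemma Im_inner_scal_r (a : Defs.C) (x y : Hs) :
  Im (inner x (vscal a y)) = Re a * Im (inner x y) + Im a * Re (inner x y).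
Proof. rewrite inner_scal_r. reflexivity. Qed.

Lemma Re_inner_scal_l (a : Defs.C) (x y : Hs) :
  Re (inner (vscal a x) y) = Re a * Re (inner x y) + Im a * Im (inner x y).
Proof. rewrite inner_scal_l. destruct a; simpl. ring. Qed.

Lemma Re_inner_scalR_l a (x y : Hs) : Re (inner (vscal (Cof a) x) y) = a * Re (inner x y).
Proof. rewrite Re_inner_scal_l. simpl. ring. Qed.

Lemma Re_inner_scalR_r a (x y : Hs) : Re (inner x (vscal (Cof a) y)) = a * Re (inner x y).
Proof. rewrite Re_inner_scal_r. simpl. ring. Qed.

Definition vnorm2 (x : Hs) := Re (inner x x).

Lemma vnorm2_ge0 (x : Hs) : 0 <= vnorm2 x.
Proof. apply inner_pos. Qed.

Lemma vnorm2_zero : vnorm2 (@vzero Hs) = 0.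
Proof. unfold vnorm2. rewrite inner_zero_r. reflexivity. Qed.

Lemma vnorm2_add (x y : Hs) : vnorm2 (vadd x y) = vnorm2 x + 2 * Re (inner x y) + vnorm2 y.
Proof. unfold vnorm2. rewrite Re_inner_add_l, !Re_inner_add_r, (Re_inner_sym y x). ring. Qed.

Lemma vnorm2_scal (a : Defs.C) (x : Hs) :
  vnorm2 (vscal a x) = (Re a * Re a + Im a * Im a) * vnorm2 x.
Proof.
  unfold vnorm2. rewrite Re_inner_scal_l, Re_inner_scal_r, Im_inner_scal_r, Im_inner_self.
  ring.
Qed.

Lemma vnorm_sqr (x : Hs) : vnorm x * vnorm x = vnorm2 x.
Proof. apply sqrt_sqrt, inner_pos. Qed.

Lemma vnorm_ge0 (x : Hs) : 0 <= vnorm x.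
Proof. apply sqrt_pos. Qed.

Lemma vnorm_zero : vnorm (@vzero Hs) = 0.
Proof. unfold vnorm. fold (vnorm2 (@vzero Hs)). rewrite vnorm2_zero. apply sqrt_0. Qed.

Lemma vnorm_lt (x : Hs) e : 0 < e -> vnorm2 x < e * e -> vnorm x < e.
Proof.
  intros He H. unfold vnorm. rewrite <- (sqrt_square e) by lra.
  apply sqrt_lt_1_alt. split; auto. apply vnorm2_ge0.
Qed.

Lemma cauchy_schwarz (x y : Hs) : Re (inner x y) <= vnorm x * vnorm y.
Proof.
  set (r := Re (inner x y)).
  assert (Hq : forall t, 0 <= vnorm2 x + 2 * t * r + t * t * vnorm2 y).
  { intro t. pose proof (vnorm2_ge0 (vadd x (vscal (Cof t) y))) as H.
    rewrite vnorm2_add, vnorm2_scal, Re_inner_scal_r in H. simpl in H. unfold r. lra. }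
  pose proof (vnorm2_ge0 y) as Hy0. pose proof (vnorm2_ge0 x) as Hx0.
  destruct (Req_dec (vnorm2 y) 0) as [Hy|Hy].
  - apply inner_def in Hy. unfold r; subst y. rewrite inner_zero_r. simpl.
    apply Rmult_le_pos; apply vnorm_ge0.
  - specialize (Hq (- r / vnorm2 y)).
    assert (Hrr : r * r <= vnorm2 x * vnorm2 y).
    { replace (vnorm2 x + 2 * (- r / vnorm2 y) * r + - r / vnorm2 y * (- r / vnorm2 y) * vnorm2 y)
        with (vnorm2 x - r * r / vnorm2 y) in Hq by (field; lra).
      apply Rmult_le_reg_r with (/ vnorm2 y). apply Rinv_0_lt_compat; lra.
      replace (vnorm2 x * vnorm2 y * / vnorm2 y) with (vnorm2 x) by (field; lra).
      unfold Rdiv in Hq. lra. }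
    unfold vnorm. rewrite <- sqrt_mult by assumption.
    destruct (Rle_or_lt r 0). { pose proof (sqrt_pos (vnorm2 x * vnorm2 y)).
    fold (vnorm2 x) (vnorm2 y). lra. }
    rewrite <- (sqrt_square r) by lra. apply sqrt_le_1_alt. fold (vnorm2 x) (vnorm2 y). lra.
Qed.

Lemma vnorm_scal (a : Defs.C) (x : Hs) :
  vnorm (vscal a x) = sqrt (Re a * Re a + Im a * Im a) * vnorm x.
Proof.
  unfold vnorm. fold (vnorm2 (vscal a x)) (vnorm2 x). rewrite vnorm2_scal.
  apply sqrt_mult. nra. apply vnorm2_ge0.
Qed.

Lemma vnorm_scalR (a : R) (x : Hs) : vnorm (vscal (Cof a) x) = Rabs a * vnorm x.
Proof. rewrite vnorm_scal. simpl. f_equal. rewrite Rmult_0_l, Rplus_0_r. apply sqrt_Rsqr_abs. Qed.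

Lemma vnorm_scal_i (b : R) (x : Hs) : vnorm (vscal (mkC 0 b) x) = Rabs b * vnorm x.
Proof. rewrite vnorm_scal. simpl. f_equal. rewrite Rmult_0_l, Rplus_0_l. apply sqrt_Rsqr_abs. Qed.

Lemma vnorm_opp (x : Hs) : vnorm (vopp x) = vnorm x.
Proof. rewrite vopp_scal, vnorm_scalR, Rabs_left by lra. ring. Qed.

Lemma cauchy_schwarz_abs (x y : Hs) : Rabs (Re (inner x y)) <= vnorm x * vnorm y.
Proof.
  unfold Rabs. destruct (Rcase_abs _).
  - pose proof (cauchy_schwarz x (vopp y)). rewrite inner_opp_r, vnorm_opp in H. simpl in H. lra.
  - apply cauchy_schwarz.
Qed.

Lemma cauchy_schwarz_Im (x y : Hs) : Rabs (Im (inner x y)) <= vnorm x * vnorm y.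
Proof.
  replace (Im (inner x y)) with (Re (inner x (vscal (mkC 0 (-1)) y))).
  - assert (Hn : vnorm (vscal (mkC 0 (-1)) y) = vnorm y).
    { rewrite vnorm_scal_i, Rabs_left by lra. ring. }
    rewrite <- Hn. apply cauchy_schwarz_abs.
  - rewrite Re_inner_scal_r. simpl. ring.
Qed.

Lemma vnorm_triangle (x y : Hs) : vnorm (vadd x y) <= vnorm x + vnorm y.
Proof.
  pose proof (vnorm_ge0 x). pose proof (vnorm_ge0 y). pose proof (vnorm_ge0 (vadd x y)).
  apply Rsqr_incr_0_var; [|nra]. unfold Rsqr.
  rewrite vnorm_sqr, vnorm2_add, <- (vnorm_sqr x), <- (vnorm_sqr y).
  pose proof (cauchy_schwarz x y). nra.
Qed.

Lemma vnorm_sub_sym (x y : Hs) : vnorm (vsub x y) = vnorm (vsub y x).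
Proof. rewrite <- vnorm_opp. unfold vsub. rewrite vopp_add, vopp_opp, vadd_comm. reflexivity. Qed.

Lemma vnorm_sub_triangle (x y z : Hs) : vnorm (vsub x z) <= vnorm (vsub x y) + vnorm (vsub y z).
Proof. rewrite (vsub_add3 x y z). apply vnorm_triangle. Qed.

Lemma vnorm_sub_le (x y : Hs) : vnorm (vsub x y) <= vnorm x + vnorm y.
Proof. unfold vsub. rewrite <- (vnorm_opp y). apply vnorm_triangle. Qed.

Lemma vnorm_rev_triangle (x y : Hs) : vnorm x - vnorm y <= vnorm (vsub x y).
Proof.
  pose proof (vnorm_sub_triangle x y vzero) as H.
  unfold vsub at 1 3 in H. rewrite vopp_zero, !vadd_0 in H. lra.
Qed.

End HilbertAlgebra.

Fixpoint rsum (n : nat) (F : nat -> R) : R :=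
  match n with O => 0 | S m => rsum m F + F m end.

Lemma rsum_ext n F G : (forall i, (i < n)%nat -> F i = G i) -> rsum n F = rsum n G.
Proof. induction n; simpl; intros H; auto. rewrite IHn, H; auto. Qed.

Lemma rsum_le n F G : (forall i, (i < n)%nat -> F i <= G i) -> rsum n F <= rsum n G.
Proof.
  induction n; simpl; intros H. lra.
  pose proof (IHn (fun i Hi => H i (Nat.lt_lt_succ_r _ _ Hi))).
  pose proof (H n (Nat.lt_succ_diag_r n)). lra.
Qed.

Lemma rsum_minus n F G : rsum n (fun i => F i - G i) = rsum n F - rsum n G.
Proof. induction n; simpl. ring. rewrite IHn. ring. Qed.

Lemma rsum_scal n a F : rsum n (fun i => a * F i) = a * rsum n F.
Proof. induction n; simpl. ring. rewrite IHn. ring. Qed.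

Lemma rsum_abs n F : Rabs (rsum n F) <= rsum n (fun i => Rabs (F i)).
Proof. induction n; simpl. rewrite Rabs_R0; lra. eapply Rle_trans. apply Rabs_triang. lra. Qed.

Lemma rsum_nonneg n F : (forall i, (i < n)%nat -> 0 <= F i) -> 0 <= rsum n F.
Proof.
  intro H. replace 0 with (rsum n (fun _ => 0)). apply rsum_le; auto.
  induction n; simpl; auto. rewrite IHn; auto; lra.
Qed.

Lemma rsum_const0 n : rsum n (fun _ => 0) = 0.
Proof. induction n; simpl; auto. rewrite IHn. ring. Qed.

Section FiniteSums.
Context {Hs : HilbertSpace}.

Lemma Re_inner_vsum_l n (x : Hs) F :
  Re (inner (vsum Hs n F) x) = rsum n (fun i => Re (inner (F i) x)).
Proof.
  induction n; simpl. rewrite inner_zero_l; reflexivity. rewrite Re_inner_add_l, IHn.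
  reflexivity.
Qed.

Lemma vnorm_vsum n (F : nat -> Hs) : vnorm (vsum Hs n F) <= rsum n (fun i => vnorm (F i)).
Proof.
  induction n; simpl. rewrite vnorm_zero; lra. eapply Rle_trans. apply vnorm_triangle. lra.
  
Qed.

Lemma vsub_vsum n (F G : nat -> Hs) :
  vsub (vsum Hs n F) (vsum Hs n G) = vsum Hs n (fun i => vsub (F i) (G i)).
Proof. induction n; simpl. apply vsub_diag. rewrite vsub_vadd, IHn. reflexivity. Qed.

Lemma Re_inner_Hsum_l n f Hop t (x y : Hs) :
  Re (inner (Hsum Hs n f Hop t x) y) = rsum n (fun i => f i t * Re (inner (Hop i x) y)).
Proof. unfold Hsum. rewrite Re_inner_vsum_l. apply rsum_ext. intros. apply Re_inner_scalR_l. Qed.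

Lemma vnorm_Hsum_sub n f g Hop t t' (x : Hs) :
  vnorm (vsub (Hsum Hs n f Hop t x) (Hsum Hs n g Hop t' x)) <=
  rsum n (fun i => Rabs (f i t - g i t') * vnorm (Hop i x)).
Proof.
  unfold Hsum. rewrite vsub_vsum. eapply Rle_trans. apply vnorm_vsum.
  apply rsum_le. intros. rewrite vsub_scalR, vnorm_scalR. lra.
Qed.

End FiniteSums.

(** * Limits and difference quotients *)

Lemma Rabs_le_inv a b : Rabs a <= b -> - b <= a <= b.
Proof. unfold Rabs. destruct (Rcase_abs a); intros; split; lra. Qed.

Definition rlim (P : R -> Prop) (F : R -> R) (t L : R) : Prop :=
  forall eps, 0 < eps -> exists d, 0 < d /\
    forall r, P r -> r <> t -> Rabs (r - t) < d -> Rabs (F r - L) < eps.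

Lemma rlim_const P c t : rlim P (fun _ => c) t c.
Proof. intros e He. exists 1. split. lra. intros. rewrite Rminus_diag, Rabs_R0. lra. Qed.

Lemma rlim_id P t : rlim P (fun r => r - t) t 0.
Proof. intros e He. exists e. split; auto. intros. rewrite Rminus_0_r. auto. Qed.

Lemma rlim_ext P F G t L :
  (forall r, P r -> r <> t -> F r = G r) -> rlim P F t L -> rlim P G t L.
Proof.
  intros HE H e He. destruct (H e He) as [d [Hd H']]. exists d; split; auto. intros.
  rewrite <- HE; auto.
Qed.

Lemma rlim_le_bound P F B t L d0 : 0 < d0 ->
  (forall r, P r -> r <> t -> Rabs (r - t) < d0 -> Rabs (F r - L) <= B r) ->
  rlim P B t 0 -> rlim P F t L.
Proof.
  intros Hd0 HB H e He. destruct (H e He) as [d [Hd H']].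
  exists (Rmin d d0). split. apply Rmin_pos; auto. intros r Pr Hr Hdr.
  specialize (H' r Pr Hr (Rlt_le_trans _ _ _ Hdr (Rmin_l _ _))).
  specialize (HB r Pr Hr (Rlt_le_trans _ _ _ Hdr (Rmin_r _ _))).
  rewrite Rminus_0_r in H'. pose proof (Rle_abs (B r)). lra.
Qed.

Lemma rlim_plus P F G t L M :
  rlim P F t L -> rlim P G t M -> rlim P (fun r => F r + G r) t (L + M).
Proof.
  intros HF HG e He. destruct (HF (e/2)) as [d1 [Hd1 H1]]. lra.
  destruct (HG (e/2)) as [d2 [Hd2 H2]]. lra.
  exists (Rmin d1 d2). split. apply Rmin_pos; auto. intros r Pr Hr Hd.
  specialize (H1 r Pr Hr (Rlt_le_trans _ _ _ Hd (Rmin_l _ _))).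
  specialize (H2 r Pr Hr (Rlt_le_trans _ _ _ Hd (Rmin_r _ _))).
  replace (F r + G r - (L + M)) with ((F r - L) + (G r - M)) by ring.
  eapply Rle_lt_trans. apply Rabs_triang. lra.
Qed.

Lemma rlim_opp P F t L : rlim P F t L -> rlim P (fun r => - F r) t (- L).
Proof.
  intros H e He. destruct (H e He) as [d [Hd H']]. exists d; split; auto. intros.
  replace (- F r - - L) with (- (F r - L)) by ring. rewrite Rabs_Ropp. auto.
Qed.

Lemma rlim_abs P F t L : rlim P F t L -> rlim P (fun r => Rabs (F r)) t (Rabs L).
Proof.
  intros H e He. destruct (H e He) as [d [Hd H']]. exists d; split; auto. intros.
  eapply Rle_lt_trans. apply Rabs_triang_inv2. auto.
Qed.

Lemma rlim_mult P F G t L M :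
  rlim P F t L -> rlim P G t M -> rlim P (fun r => F r * G r) t (L * M).
Proof.
  intros HF HG e He.
  set (e1 := Rmin 1 (e / (Rabs L + Rabs M + 1))).
  pose proof (Rabs_pos L); pose proof (Rabs_pos M).
  assert (He1 : 0 < e1) by (apply Rmin_pos; [lra | apply Rdiv_lt_0_compat; lra]).
  assert (He1' : e1 <= 1) by apply Rmin_l.
  assert (Hle : e1 * (Rabs L + Rabs M + 1) <= e).
  { apply Rle_trans with (e / (Rabs L + Rabs M + 1) * (Rabs L + Rabs M + 1)).
    apply Rmult_le_compat_r. lra. apply Rmin_r. right. field. lra. }
  destruct (HF e1 He1) as [d1 [Hd1 H1]]. destruct (HG e1 He1) as [d2 [Hd2 H2]].
  exists (Rmin d1 d2). split. apply Rmin_pos; auto. intros r Pr Hr Hd.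
  specialize (H1 r Pr Hr (Rlt_le_trans _ _ _ Hd (Rmin_l _ _))).
  specialize (H2 r Pr Hr (Rlt_le_trans _ _ _ Hd (Rmin_r _ _))).
  replace (F r * G r - L * M) with ((F r - L) * (G r - M) + (F r - L) * M + L * (G r - M)) by ring.
  pose proof (Rabs_pos (F r - L)); pose proof (Rabs_pos (G r - M)).
  eapply Rle_lt_trans. eapply Rle_trans. apply Rabs_triang.
  apply Rplus_le_compat_r. apply Rabs_triang.
  rewrite !Rabs_mult. nra.
Qed.

Lemma rlim_rsum P n (F : nat -> R -> R) t (L : nat -> R) :
  (forall i, (i < n)%nat -> rlim P (F i) t (L i)) ->
  rlim P (fun r => rsum n (fun i => F i r)) t (rsum n L).
Proof.
  induction n; simpl; intros H. apply rlim_const.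
  apply rlim_plus. apply IHn. intros; apply H; lia. apply H; lia.
Qed.

Lemma rdiffq_rlim (I P : R -> Prop) (g : R -> R) g' t :
  (forall r, P r -> I r) ->
  (forall eps, 0 < eps -> exists d, 0 < d /\ forall h, h <> 0 -> I (t + h) -> Rabs h < d ->
      Rabs ((g (t + h) - g t) / h - g') < eps) ->
  rlim P (fun r => (g r - g t) / (r - t)) t g'.
Proof.
  intros HPI H e He. destruct (H e He) as [d [Hd H']]. exists d; split; auto.
  intros r Pr Hr Hdr. specialize (H' (r - t)). replace (t + (r - t)) with r in H' by ring.
  apply H'; auto. lra.
Qed.

Lemma rdiffq_cont P (g : R -> R) g' t :
  rlim P (fun r => (g r - g t) / (r - t)) t g' -> rlim P g t (g t).
Proof.
  intro H. pose proof (rlim_plus _ _ _ _ _ _ (rlim_mult _ _ _ _ _ _ (rlim_id P t) H)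
                                    (rlim_const P (g t) t)) as H'.
  rewrite Rmult_0_l, Rplus_0_l in H'.
  eapply rlim_ext; [|apply H']. intros r _ Hr. simpl. field. lra.
Qed.

Section VectorLimits.
Context {Hs : HilbertSpace}.

Definition vlim (P : R -> Prop) (F : R -> Hs) (t : R) (v : Hs) : Prop :=
  forall eps, 0 < eps -> exists d, 0 < d /\
    forall r, P r -> r <> t -> Rabs (r - t) < d -> vnorm (vsub (F r) v) < eps.

Lemma vlim_rlim_norm P F t v : vlim P F t v -> rlim P (fun r => vnorm (vsub (F r) v)) t 0.
Proof.
  intros H e He. destruct (H e He) as [d [Hd H']]. exists d; split; auto. intros.
  rewrite Rminus_0_r, Rabs_right by (apply Rle_ge, vnorm_ge0). auto.
Qed.

Lemma vlim_le_bound P F B t v :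
  (forall r, P r -> r <> t -> vnorm (vsub (F r) v) <= B r) -> rlim P B t 0 -> vlim P F t v.
Proof.
  intros HB H e He. destruct (H e He) as [d [Hd H']]. exists d; split; auto. intros r Pr Hr Hdr.
  specialize (H' r Pr Hr Hdr). rewrite Rminus_0_r in H'. specialize (HB r Pr Hr).
  pose proof (Rle_abs (B r)). lra.
Qed.

Lemma vlim_const P t (x : Hs) : vlim P (fun _ => x) t x.
Proof. intros e He. exists 1. split. lra. intros. rewrite vsub_diag, vnorm_zero. auto. Qed.

Lemma vlim_ext P (F G : R -> Hs) t v : (forall r, F r = G r) -> vlim P F t v -> vlim P G t v.
Proof.
  intros E H e He. destruct (H e He) as [d [Hd H']]. exists d; split; auto. intros.
  rewrite <- E. auto.
Qed.

Lemma vlim_sub P (F G : R -> Hs) t a b :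
  vlim P F t a -> vlim P G t b -> vlim P (fun r => vsub (F r) (G r)) t (vsub a b).
Proof.
  intros HF HG. apply vlim_le_bound with (fun r => vnorm (vsub (F r) a) + vnorm (vsub (G r) b)).
  - intros r _ _. rewrite vsub_sub4. apply vnorm_sub_le.
  - rewrite <- (Rplus_0_l 0). apply rlim_plus; apply vlim_rlim_norm; auto.
Qed.

Lemma rlim_Re_inner P (F G : R -> Hs) t a b :
  vlim P F t a -> vlim P G t b -> rlim P (fun r => Re (inner (F r) (G r))) t (Re (inner a b)).
Proof.
  intros HF HG. set (dF r := vnorm (vsub (F r) a)). set (dG r := vnorm (vsub (G r) b)).
  apply rlim_le_bound with (fun r => dF r * dG r + dF r * vnorm b + vnorm a * dG r) 1; [lra| |].
  - intros r _ _ _.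
    replace (Re (inner (F r) (G r)) - Re (inner a b)) with
      (Re (inner (vsub (F r) a) (vsub (G r) b)) + Re (inner (vsub (F r) a) b) +
       Re (inner a (vsub (G r) b))) by (rewrite !Re_inner_sub_r, !Re_inner_sub_l; ring).
    pose proof (cauchy_schwarz_abs (vsub (F r) a) (vsub (G r) b)).
    pose proof (cauchy_schwarz_abs (vsub (F r) a) b).
    pose proof (cauchy_schwarz_abs a (vsub (G r) b)).
    eapply Rle_trans. eapply Rle_trans. apply Rabs_triang.
    apply Rplus_le_compat_r. apply Rabs_triang. unfold dF, dG. lra.
  - pose proof (vlim_rlim_norm _ _ _ _ HF) as LF. pose proof (vlim_rlim_norm _ _ _ _ HG) as LG.
    replace 0 with (0 * 0 + 0 * vnorm b + vnorm a * 0) by ring.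
    apply rlim_plus; [apply rlim_plus|]; apply rlim_mult; auto; apply rlim_const.
Qed.

Lemma rlim_Re_inner_bounded P (F G : R -> Hs) t a b S d0 :
  vlim P F t a -> 0 < d0 ->
  (forall r, P r -> r <> t -> Rabs (r - t) < d0 -> vnorm (G r) <= S) ->
  rlim P (fun r => Re (inner a (G r))) t (Re (inner a b)) ->
  rlim P (fun r => Re (inner (F r) (G r))) t (Re (inner a b)).
Proof.
  intros HF Hd0 HB HW. set (M := Rmax S 0).
  apply rlim_le_bound with
    (fun r => vnorm (vsub (F r) a) * M + Rabs (Re (inner a (G r)) - Re (inner a b))) d0; auto.
  - intros r Pr Hr Hdr.
    replace (Re (inner (F r) (G r)) - Re (inner a b)) with
      (Re (inner (vsub (F r) a) (G r)) + (Re (inner a (G r)) - Re (inner a b)))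
      by (rewrite Re_inner_sub_l; ring).
    eapply Rle_trans. apply Rabs_triang. apply Rplus_le_compat_r.
    eapply Rle_trans. apply cauchy_schwarz_abs. apply Rmult_le_compat_l. apply vnorm_ge0.
    eapply Rle_trans. apply (HB r Pr Hr Hdr). apply Rmax_l.
  - replace 0 with (0 * M + Rabs (Re (inner a b) - Re (inner a b))) by
      (rewrite Rminus_diag, Rabs_R0; ring).
    apply rlim_plus. apply rlim_mult. apply (vlim_rlim_norm _ _ _ _ HF). apply rlim_const.
    apply rlim_abs. apply rlim_plus; auto. apply rlim_const.
Qed.

Lemma weak_lim_dense P (G : R -> Hs) t b S d0 (D : Hs -> Prop) :
  dense Hs D -> 0 < d0 ->
  (forall r, P r -> r <> t -> Rabs (r - t) < d0 -> vnorm (G r) <= S) ->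
  (forall z, D z -> rlim P (fun r => Re (inner z (G r))) t (Re (inner z b))) ->
  forall z, rlim P (fun r => Re (inner z (G r))) t (Re (inner z b)).
Proof.
  intros HD Hd0 HB HW z e He.
  set (S' := Rmax S 0 + vnorm b + 1).
  assert (HS'0 : 1 <= S'). { unfold S'. pose proof (Rmax_r S 0). pose proof (vnorm_ge0 b). lra. }
  destruct (HD z (e / 3 / S')) as [z' [Dz' Hz']]. apply Rdiv_lt_0_compat; lra.
  destruct (HW z' Dz' (e/3)) as [d [Hd H]]. lra.
  exists (Rmin d d0). split. apply Rmin_pos; auto. intros r Pr Hr Hdr.
  specialize (H r Pr Hr (Rlt_le_trans _ _ _ Hdr (Rmin_l _ _))).
  specialize (HB r Pr Hr (Rlt_le_trans _ _ _ Hdr (Rmin_r _ _))).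
  replace (Re (inner z (G r)) - Re (inner z b)) with
    (Re (inner (vsub z z') (G r)) + (Re (inner z' (G r)) - Re (inner z' b)) - Re (inner (vsub z z') b))
    by (rewrite !Re_inner_sub_l; ring).
  pose proof (cauchy_schwarz_abs (vsub z z') (G r)).
  pose proof (cauchy_schwarz_abs (vsub z z') b).
  pose proof (vnorm_ge0 (vsub z z')). pose proof (vnorm_ge0 b). pose proof (vnorm_ge0 (G r)).
  assert (Hm : vnorm (vsub z z') * S' <= e / 3).
  { apply Rle_trans with (e / 3 / S' * S'). apply Rmult_le_compat_r; lra. right; field; lra. }
  assert (vnorm (vsub z z') * vnorm (G r) <= e/3).
  { eapply Rle_trans; [|apply Hm]. apply Rmult_le_compat_l; auto. unfold S'.
    pose proof (Rmax_l S 0). lra. }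
  assert (vnorm (vsub z z') * vnorm b <= e/3).
  { eapply Rle_trans; [|apply Hm]. apply Rmult_le_compat_l; auto. unfold S'.
    pose proof (Rmax_r S 0). lra. }
  unfold Rminus at 1. eapply Rle_lt_trans. apply Rabs_triang. rewrite Rabs_Ropp.
  eapply Rle_lt_trans. apply Rplus_le_compat_r. apply Rabs_triang. lra.
Qed.

Lemma dense_norm_bound (D : Hs -> Prop) (w : Hs) A : dense Hs D -> 0 <= A ->
  (forall z, D z -> Re (inner z w) <= vnorm z * A) -> vnorm w <= A.
Proof.
  intros HD HA H. apply Rnot_lt_le. intro Hc.
  set (eta := (vnorm w - A) / 2).
  destruct (HD w eta) as [z [Dz Hz]]. unfold eta; lra.
  specialize (H z Dz).
  assert (E : Re (inner z w) = vnorm w * vnorm w - Re (inner (vsub w z) w)).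
  { rewrite Re_inner_sub_l, vnorm_sqr. unfold vnorm2. ring. }
  pose proof (cauchy_schwarz_abs (vsub w z) w) as Hcs. apply Rabs_le_inv in Hcs.
  pose proof (vnorm_sub_triangle z w vzero) as Hz0. unfold vsub at 1 3 in Hz0.
  rewrite vopp_zero, !vadd_0, vnorm_sub_sym in Hz0.
  pose proof (vnorm_ge0 w). pose proof (vnorm_ge0 (vsub w z)).
  assert (vnorm (vsub w z) * vnorm w <= eta * vnorm w) by (apply Rmult_le_compat_r; lra).
  assert (vnorm z * A <= (vnorm w + eta) * A) by (apply Rmult_le_compat_r; lra).
  unfold eta in *. nra.
Qed.

Definition vdiffq (F : R -> Hs) (t r : R) : Hs := vscal (Cof (/ (r - t))) (vsub (F r) (F t)).

Lemma vderiv_vlim (I P : R -> Prop) (F : R -> Hs) t v :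
  (forall r, P r -> I r) -> has_vderiv_in Hs I F t v -> vlim P (vdiffq F t) t v.
Proof.
  intros HPI H e He. destruct (H e He) as [d [Hd H']]. exists d; split; auto.
  intros r Pr Hr Hdr. specialize (H' (r - t)).
  replace (t + (r - t)) with r in H' by ring. apply H'; auto. lra.
Qed.

Lemma vdiffq_cont P (F : R -> Hs) t v : vlim P (vdiffq F t) t v -> vlim P F t (F t).
Proof.
  intros H. apply vlim_le_bound with (fun r => Rabs (r - t) * (vnorm (vsub (vdiffq F t r) v) + vnorm v)).
  - intros r _ Hr. unfold vdiffq.
    rewrite <- (vscal_inv_cancel (r - t) (vsub (F r) (F t))) at 1 by lra.
    rewrite vnorm_scalR. apply Rmult_le_compat_l. apply Rabs_pos.
    pose proof (vnorm_rev_triangle (vscal (Cof (/ (r - t))) (vsub (F r) (F t))) v). lra.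
  - replace 0 with (Rabs 0 * (0 + vnorm v)) by (rewrite Rabs_R0; ring).
    apply rlim_mult. apply rlim_abs, rlim_id.
    apply rlim_plus. apply (vlim_rlim_norm _ _ _ _ H). apply rlim_const.
Qed.

Lemma vnorm2_diffq P (F : R -> Hs) t v :
  vlim P (vdiffq F t) t v ->
  rlim P (fun r => (vnorm2 (F r) - vnorm2 (F t)) / (r - t)) t (2 * Re (inner (F t) v)).
Proof.
  intro H. pose proof (vdiffq_cont P F t v H) as Hc.
  apply rlim_ext with (fun r => Re (inner (vdiffq F t r) (F r)) + Re (inner (F t) (vdiffq F t r))).
  - intros r _ Hr. unfold vdiffq.
    rewrite Re_inner_scalR_l, Re_inner_scalR_r, Re_inner_sub_l, Re_inner_sub_r.
    unfold vnorm2. rewrite (Re_inner_sym (F t) (F r)). field. lra.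
  - replace (2 * Re (inner (F t) v)) with (Re (inner v (F t)) + Re (inner (F t) v))
      by (rewrite Re_inner_sym; ring).
    apply rlim_plus; apply rlim_Re_inner; auto. apply vlim_const.
Qed.

End VectorLimits.

(** * Real analysis on a compact interval *)

Lemma is_lub_approx (S : R -> Prop) z eta :
  is_lub S z -> 0 < eta -> exists x, S x /\ z - eta < x /\ x <= z.
Proof.
  intros [H1 H2] He. destruct (classic (exists x, S x /\ z - eta < x)) as [[x [Sx Hx]]|Hn].
  - exists x. split; auto.
  - exfalso. assert (z <= z - eta).
    { apply H2. intros x Sx. apply Rnot_lt_le. intro. apply Hn. eauto. }
    lra.
Qed.

(* Continuous induction: the supremum of the points up to which the estimate holds is [b]. *)
Lemma mean_value_le_slope (F : R -> R) a b L : a <= b ->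
  (forall t, a <= t <= b -> exists d, 0 < d /\
     forall x, a <= x <= b -> Rabs (x - t) < d ->
       (x < t -> F t - F x <= L * (t - x)) /\ (t < x -> F x - F t <= L * (x - t))) ->
  F b - F a <= L * (b - a).
Proof.
  intros Hab HD.
  set (S := fun x => a <= x <= b /\ F x - F a <= L * (x - a)).
  assert (HSa : S a) by (split; [lra | ring_simplify; lra]).
  destruct (completeness S (ex_intro _ b (fun x Sx => proj2 (proj1 Sx))) (ex_intro _ a HSa))
    as [z Hz].
  assert (Haz : a <= z) by (apply Hz; auto).
  assert (Hzb : z <= b) by (apply Hz; intros x [Hx _]; lra).
  destruct (HD z (conj Haz Hzb)) as [d [Hd Hd']].
  assert (HzS : S z).
  { destruct (is_lub_approx S z d Hz Hd) as [x [Sx [Hx1 Hx2]]].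
    destruct (Req_dec x z) as [E|E]. subst; auto.
    destruct Sx as [Hxab Hx]. split. lra.
    destruct (Hd' x Hxab) as [Hl _]. rewrite Rabs_left; lra.
    specialize (Hl ltac:(lra)). nra. }
  destruct (Req_dec z b) as [<-|E]. apply HzS.
  exfalso. set (x := Rmin (z + d / 2) b).
  assert (Hx1 : z < x) by (apply Rmin_glb_lt; lra).
  assert (Hx2 : x <= b) by apply Rmin_r.
  assert (Hx3 : x <= z + d / 2) by apply Rmin_l.
  destruct (Hd' x ltac:(lra)) as [_ Hr]. rewrite Rabs_right; lra.
  specialize (Hr Hx1). destruct HzS as [_ HzS].
  assert (S x) by (split; [lra | nra]).
  assert (x <= z) by (apply Hz; auto). lra.
Qed.

Lemma mean_value_le (F : R -> R) (c : R -> R) a b L : a <= b ->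
  (forall t, a <= t <= b -> rlim (fun r => a <= r <= b) (fun r => (F r - F t) / (r - t)) t (c t)) ->
  (forall t, a <= t <= b -> c t <= L) ->
  F b - F a <= L * (b - a).
Proof.
  intros Hab HR Hc.
  assert (Heps : forall eps, 0 < eps -> F b - F a <= (L + eps) * (b - a)).
  { intros eps He. apply mean_value_le_slope; auto. intros t Ht.
    destruct (HR t Ht eps He) as [d [Hd H]]. exists d; split; auto. intros x Hx Hdx.
    specialize (Hc t Ht). split; intro Hxt;
      specialize (H x Hx ltac:(lra) Hdx); apply Rabs_def2 in H;
      assert (Hq : (F x - F t) / (x - t) <= L + eps) by lra.
    - replace (F t - F x) with ((F x - F t) / (x - t) * (t - x)) by (field; lra).
      apply Rmult_le_compat_r; lra.
    - replace (F x - F t) with ((F x - F t) / (x - t) * (x - t)) by (field; lra).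
      apply Rmult_le_compat_r; lra. }
  destruct (Req_dec a b) as [<-|Hne]. { rewrite !Rminus_diag. lra. }
  apply le_epsilon. intros eps He.
  specialize (Heps (eps / (b - a)) ltac:(apply Rdiv_lt_0_compat; lra)).
  replace ((L + eps / (b - a)) * (b - a)) with (L * (b - a) + eps) in Heps by (field; lra).
  exact Heps.
Qed.

Lemma mean_value_abs_le (F : R -> R) (c : R -> R) a b L : a <= b ->
  (forall t, a <= t <= b -> rlim (fun r => a <= r <= b) (fun r => (F r - F t) / (r - t)) t (c t)) ->
  (forall t, a <= t <= b -> Rabs (c t) <= L) ->
  Rabs (F b - F a) <= L * (b - a).
Proof.
  intros Hab HR Hc. apply Rabs_le. split.
  - assert (- F b - - F a <= L * (b - a)).
    { apply (mean_value_le (fun r => - F r) (fun r => - c r)); auto.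
      - intros t Ht. eapply rlim_ext; [|apply rlim_opp, HR; auto]. intros. simpl. field. lra.
      - intros t Ht. specialize (Hc t Ht). apply Rabs_le_inv in Hc. lra. }
    lra.
  - apply (mean_value_le F c); auto. intros t Ht. specialize (Hc t Ht). apply Rabs_le_inv in Hc.
    lra.
Qed.

Definition locally_bounded_at (P : R -> Prop) (m : R -> R) (t : R) : Prop :=
  exists rho S, 0 < rho /\ forall r, P r -> Rabs (r - t) < rho -> m r <= S.

Lemma locally_bounded_at_rsum P n (F : nat -> R -> R) t :
  (forall i, (i < n)%nat -> locally_bounded_at P (F i) t) ->
  locally_bounded_at P (fun r => rsum n (fun i => F i r)) t.
Proof.
  induction n; intros H.
  - exists 1, 0. split. lra. intros. simpl. lra.
  - destruct IHn as [rho1 [S1 [H1 H1']]]. intros i Hi; apply H; lia.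
    destruct (H n ltac:(lia)) as [rho2 [S2 [H2 H2']]].
    exists (Rmin rho1 rho2), (S1 + S2). split. apply Rmin_pos; auto. intros r Hr Hrt. simpl.
    pose proof (H1' r Hr (Rlt_le_trans _ _ _ Hrt (Rmin_l _ _))).
    pose proof (H2' r Hr (Rlt_le_trans _ _ _ Hrt (Rmin_r _ _))). lra.
Qed.

Lemma locally_bounded_compact (m : R -> R) p q : p <= q ->
  (forall t, p <= t <= q -> locally_bounded_at (fun r => p <= r <= q) m t) ->
  exists S, forall r, p <= r <= q -> m r <= S.
Proof.
  intros Hpq HL.
  set (Z := fun z => p <= z <= q /\ exists S, forall r, p <= r <= z -> m r <= S).
  assert (HZp : Z p).
  { split. lra. destruct (HL p ltac:(lra)) as [rho [S [Hr HS]]]. exists S. intros r Hr'.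
    apply HS. lra. replace (r - p) with 0 by lra. rewrite Rabs_R0. lra. }
  destruct (completeness Z (ex_intro _ q (fun x Zx => proj2 (proj1 Zx))) (ex_intro _ p HZp))
    as [z Hz].
  assert (Hpz : p <= z) by (apply Hz; auto).
  assert (Hzq : z <= q) by (apply Hz; intros x [Hx _]; lra).
  destruct (HL z ltac:(lra)) as [rho [S1 [Hrho HS1]]].
  destruct (is_lub_approx Z z (rho/2) Hz ltac:(lra)) as [x [[Hxpq [S2 HS2]] [Hx1 Hx2]]].
  assert (Hext : forall w, z <= w <= q -> w < z + rho / 2 ->
                  forall r, p <= r <= w -> m r <= Rmax S1 S2).
  { intros w Hw Hw2 r Hr. destruct (Rle_or_lt r x).
    - eapply Rle_trans. apply HS2. lra. apply Rmax_r.
    - eapply Rle_trans. apply HS1. lra. apply Rabs_def1; lra. apply Rmax_l. }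
  destruct (Req_dec z q) as [<-|E].
  - exists (Rmax S1 S2). intros r Hr. apply (Hext z); lra.
  - exfalso. set (w := Rmin (z + rho / 4) q).
    assert (z < w) by (apply Rmin_glb_lt; lra).
    assert (w <= q) by apply Rmin_r. assert (w <= z + rho/4) by apply Rmin_l.
    assert (Z w) by (split; [lra | exists (Rmax S1 S2); apply Hext; lra]).
    assert (w <= z) by (apply Hz; auto). lra.
Qed.

Lemma upper_bound_contraction (m : R -> R) (Z : R -> Prop) c :
  (forall S, (forall r, Z r -> m r <= S) -> forall r, Z r -> m r <= c + S / 2) ->
  (exists S, forall r, Z r -> m r <= S) -> forall r, Z r -> m r <= 2 * c.
Proof.
  intros H [S HS] r Zr.
  set (E := fun y => exists r, Z r /\ y = m r).
  assert (HE : bound E) by (exists S; intros y [r' [Zr' ->]]; auto).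
  destruct (completeness E HE (ex_intro _ (m r) (ex_intro _ r (conj Zr eq_refl)))) as [M [HM1 HM2]].
  assert (Hb : forall r, Z r -> m r <= M) by (intros r' Zr'; apply HM1; exists r'; auto).
  assert (M <= c + M / 2).
  { apply HM2. intros y [r' [Zr' ->]]. apply (H M Hb r' Zr'). }
  pose proof (Hb r Zr). lra.
Qed.

Definition closed_in (p q : R) (B : R -> Prop) : Prop :=
  forall x, p <= x <= q -> (forall eps, 0 < eps -> exists y, B y /\ Rabs (y - x) < eps) -> B x.

Lemma closed_in_last_before (B : R -> Prop) p q x0 r :
  closed_in p q B -> p <= x0 -> r <= q -> x0 <= r -> B x0 -> ~ B r ->
  exists a, B a /\ x0 <= a < r /\ forall w, a < w < r -> ~ B w.
Proof.
  intros HB Hp Hq Hxr Bx0 Br.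
  set (S := fun w => B w /\ x0 <= w <= r).
  destruct (completeness S (ex_intro _ r (fun w Sw => proj2 (proj2 Sw)))
                          (ex_intro _ x0 (conj Bx0 (conj (Rle_refl x0) Hxr)))) as [a Ha].
  assert (Ha1 : x0 <= a) by (apply Ha; split; auto; lra).
  assert (Ha2 : a <= r) by (apply Ha; intros w [_ Hw]; lra).
  assert (Ba : B a).
  { apply HB. lra. intros e He. destruct (is_lub_approx S a e Ha He) as [w [[Bw Hw] [Hw1 Hw2]]].
    exists w. split; auto. apply Rabs_def1; lra. }
  exists a. split; auto. split.
  - split; auto. destruct (Rle_lt_or_eq_dec a r Ha2) as [E|<-]; [auto | contradiction].
  - intros w Hw Bw. assert (w <= a) by (apply Ha; split; auto; lra). lra.
Qed.

Lemma closed_in_first_after (B : R -> Prop) p q x0 r :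
  closed_in p q B -> p <= r -> x0 <= q -> r <= x0 -> B x0 -> ~ B r ->
  exists a, B a /\ r < a <= x0 /\ forall w, r < w < a -> ~ B w.
Proof.
  intros HB Hp Hq Hrx Bx0 Br.
  destruct (closed_in_last_before (fun w => B (- w)) (- q) (- p) (- x0) (- r))
    as [a [Ba [Ha Hfree]]]; try lra; rewrite ?Ropp_involutive; auto.
  - intros x Hx Hc. apply HB. lra. intros e He. destruct (Hc e He) as [y [By Hy]].
    exists (- y). split; auto. rewrite <- Rabs_Ropp. replace (- (- y - - x)) with (y - x) by ring.
    auto.
  - exists (- a). split; auto. split. lra.
    intros w Hw Bw. apply (Hfree (- w)). lra. rewrite Ropp_involutive. auto.
Qed.

Section BaireInterval.
Variables (B : R -> Prop) (E : nat -> R -> Prop) (s T : R).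
Hypothesis B_in : forall x, B x -> s <= x <= T.
Hypothesis B_closed : closed_in s T B.
Hypothesis E_closed : forall N, closed_in s T (E N).

Definition meets_B (pq : R * R) := fst pq < snd pq /\ exists x, B x /\ fst pq < x < snd pq.

Definition shrinks_avoiding (N : nat) (pq pq' : R * R) :=
  meets_B pq' /\ fst pq < fst pq' /\ snd pq' < snd pq /\ snd pq' - fst pq' <= / INR (S N) /\
  forall y, fst pq' <= y <= snd pq' -> ~ E N y.

Lemma shrinks_avoiding_exists N p q y :
  B y -> p < y < q -> ~ E N y -> exists pq', shrinks_avoiding N (p, q) pq'.
Proof.
  intros By Hy HEy.
  assert (Heps : exists eps, 0 < eps /\ forall w, E N w -> eps <= Rabs (w - y)).
  { apply NNPP. intro H4. apply HEy. apply E_closed. apply B_in; auto.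
    intros e He. apply NNPP. intro H5. apply H4. exists e. split; auto.
    intros w Ew. apply Rnot_lt_le. intro H6. apply H5. exists w. auto. }
  destruct Heps as [eps [Heps HE]].
  assert (HN : 0 < / INR (S N)) by (apply Rinv_0_lt_compat, lt_0_INR; lia).
  set (r := Rmin (Rmin eps (y - p)) (Rmin (q - y) (/ INR (S N))) / 2).
  pose proof (Rmin_l (Rmin eps (y - p)) (Rmin (q - y) (/ INR (S N)))).
  pose proof (Rmin_r (Rmin eps (y - p)) (Rmin (q - y) (/ INR (S N)))).
  pose proof (Rmin_l eps (y - p)). pose proof (Rmin_r eps (y - p)).
  pose proof (Rmin_l (q - y) (/ INR (S N))). pose proof (Rmin_r (q - y) (/ INR (S N))).
  assert (Hr0 : 0 < r) by (apply Rdiv_lt_0_compat; [repeat apply Rmin_pos; lra | lra]).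
  exists (y - r, y + r). unfold shrinks_avoiding, meets_B; cbn [fst snd].
  split. { split. lra. exists y; split; auto; lra. }
  split. unfold r; lra. split. unfold r; lra. split. unfold r; lra.
  intros w Hw Ew. specialize (HE w Ew).
  assert (Rabs (w - y) <= r) by (apply Rabs_le; split; lra). unfold r in *; lra.
Qed.

Definition shrink_step (N : nat) (pq : R * R) : R * R :=
  epsilon (inhabits pq) (fun pq' => meets_B pq -> shrinks_avoiding N pq pq').

Fixpoint shrink_seq (k : nat) : R * R :=
  match k with O => (s - 1, T + 1) | S j => shrink_step j (shrink_seq j) end.

Lemma nat_inv_lt eps : 0 < eps -> exists k : nat, / INR (S k) < eps.
Proof.
  intro He. destruct (archimed (/ eps)) as [Har _].
  assert (0 < / eps) by (apply Rinv_0_lt_compat; auto).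
  exists (Z.to_nat (up (/ eps))).
  assert (IZR (up (/ eps)) = INR (Z.to_nat (up (/ eps)))).
  { rewrite INR_IZR_INZ, Z2Nat.id. reflexivity. apply le_IZR. lra. }
  rewrite S_INR. apply Rlt_le_trans with (/ (/ eps)). apply Rinv_lt_contravar. nra. lra.
  rewrite Rinv_inv. lra.
Qed.

Lemma shrink_seq_spec x0 : B x0 ->
  (forall k p q, meets_B (p, q) -> exists y, B y /\ p < y < q /\ ~ E k y) ->
  forall k, meets_B (shrink_seq k) /\ shrinks_avoiding k (shrink_seq k) (shrink_seq (S k)).
Proof.
  intros Bx0 Havoid.
  assert (Hsp : forall k, meets_B (shrink_seq k) ->
                  shrinks_avoiding k (shrink_seq k) (shrink_seq (S k))).
  { intros k Hk. simpl. unfold shrink_step.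
    apply (epsilon_spec (inhabits _) (fun pq' => meets_B _ -> shrinks_avoiding k _ pq')); auto.
    destruct (shrink_seq k) as [p q].
    destruct (Havoid k p q Hk) as [y [By [Hy HEy]]].
    destruct (shrinks_avoiding_exists k p q y By Hy HEy) as [pq' H]. exists pq'. auto. }
  assert (Hm : forall k, meets_B (shrink_seq k)).
  { induction k.
    - pose proof (B_in x0 Bx0). split; simpl. lra. exists x0. split; auto. simpl. lra.
    - apply (Hsp k IHk). }
  intro k. split; auto.
Qed.

(* Nested intervals: if no [E N] contains a relative neighbourhood in [B], the intersection of
   the shrinking intervals is a point of [B] outside every [E N]. *)
Lemma baire_interval :
  (forall x, B x -> exists N, E N x) -> (exists x, B x) ->
  exists N p q, (exists x, B x /\ p < x < q) /\ (forall x, B x -> p < x < q -> E N x).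
Proof.
  intros Hcov [x0 Hx0]. apply NNPP. intro Hn.
  assert (Havoid : forall k p q, meets_B (p, q) -> exists y, B y /\ p < y < q /\ ~ E k y).
  { intros k p q [_ Hk]. apply NNPP. intro H2. apply Hn. exists k, p, q. split; auto.
    intros y By Hy. apply NNPP. intro H3. apply H2. eauto. }
  pose proof (shrink_seq_spec x0 Hx0 Havoid) as Hsp.
  set (sq := shrink_seq) in *.
  assert (Hmono : forall k j, (k <= j)%nat -> fst (sq k) <= fst (sq j) /\ snd (sq j) <= snd (sq k)).
  { intros k j Hkj. induction Hkj. lra. destruct (Hsp m) as [_ [_ [H1 [H2 _]]]]. lra. }
  assert (Hnest : forall k j, fst (sq k) < snd (sq j)).
  { intros k j. destruct (Compare_dec.le_lt_dec k j) as [Hkj|Hkj].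
    - destruct (Hmono k j Hkj). destruct (Hsp j) as [[? _] _]. lra.
    - destruct (Hmono j k ltac:(lia)). destruct (Hsp k) as [[? _] _]. lra. }
  set (A := fun x => exists k, x = fst (sq k)).
  assert (HAb : bound A) by (exists (snd (sq O)); intros x [k ->]; left; apply Hnest).
  destruct (completeness A HAb (ex_intro _ (fst (sq O)) (ex_intro _ O eq_refl))) as [z Hz].
  assert (Hz1 : forall k, fst (sq k) <= z) by (intro k; apply Hz; exists k; auto).
  assert (Hz2 : forall k, z <= snd (sq k)) by (intro k; apply Hz; intros x [j ->]; left; apply Hnest).
  assert (Hclose : forall eps, 0 < eps -> exists y, B y /\ Rabs (y - z) < eps).
  { intros eps He. destruct (nat_inv_lt eps He) as [k Hk].
    destruct (Hsp k) as [_ [[_ [y [By Hy]]] [_ [_ [Hlen _]]]]].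
    exists y. split; auto. pose proof (Hz1 (S k)). pose proof (Hz2 (S k)). apply Rabs_def1; lra. }
  assert (Hzs : s <= z <= T).
  { split; apply Rnot_lt_le; intro Hc.
    - destruct (Hclose (s - z) ltac:(lra)) as [y [By Hy]]. pose proof (B_in y By).
      apply Rabs_def2 in Hy. lra.
    - destruct (Hclose (z - T) ltac:(lra)) as [y [By Hy]]. pose proof (B_in y By).
      apply Rabs_def2 in Hy. lra. }
  destruct (Hcov z (B_closed z Hzs Hclose)) as [N HN].
  destruct (Hsp N) as [_ [_ [_ [_ [_ Hav]]]]]. apply (Hav z); auto.
Qed.

End BaireInterval.

(** * Boundedness of |H(t) U(t,s) Psi| *)

Section PropagatedState.
Variables (Hs : HilbertSpace) (n : nat) (Hop : nat -> Hs -> Hs)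
  (D : Hs -> Prop) (I : R -> Prop) (f : nat -> R -> R) (U : R -> R -> Hs -> Hs).
Hypotheses (Hop_symm : forall i, (i < n)%nat -> symmetric_op Hs D (Hop i))
  (I_interval : is_interval I) (Hself : hyp_i Hs I D n f Hop) (HU : propagator_of Hs I D n f Hop U).
Variable fp : nat -> R -> R.
Hypothesis f_deriv : forall i, (i < n)%nat -> forall t, I t -> forall eps, 0 < eps ->
  exists d, 0 < d /\ forall h, h <> 0 -> I (t + h) -> Rabs h < d ->
    Rabs ((f i (t + h) - f i t) / h - fp i t) < eps.
Variables (Psi : Hs) (s T : R).
Hypotheses (DPsi : D Psi) (Is : I s) (IT : I T) (HsT : s < T).

Definition Hamil t x := Hsum Hs n f Hop t x.
Definition phi t := U t s Psi.
Definition Hphi t := Hamil t (phi t).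
Definition Hphi_norm t := vnorm (Hphi t).

Lemma in_I r : s <= r <= T -> I r.
Proof. intros [H1 H2]. apply (I_interval s r T); auto. Qed.

Lemma D_dense : dense Hs D.
Proof. destruct (Hself s Is) as [[_ [HD _]] _]. exact HD. Qed.

Lemma Hamil_symm t x y : I t -> D x -> D y -> inner (Hamil t x) y = inner x (Hamil t y).
Proof. intros It Dx Dy. destruct (Hself t It) as [[_ [_ [_ H]]] _]. apply H; auto. Qed.

Lemma Hop_symm_inner i x y : (i < n)%nat -> D x -> D y -> inner (Hop i x) y = inner x (Hop i y).
Proof. intros Hin Dx Dy. destruct (Hop_symm i Hin) as [_ [_ [_ H]]]. apply H; auto. Qed.

Lemma U_in_D t y x : I t -> I y -> D x -> D (U t y x).
Proof. intros It Iy Dx. destruct HU as [_ Hsol]. destruct (Hsol y x Iy Dx) as [H _]. auto. Qed.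

Lemma U_has_vderiv t y x : I t -> I y -> D x ->
  has_vderiv_in Hs I (fun r => U r y x) t (vscal (mkC 0 (-1)) (Hamil t (U t y x))).
Proof.
  intros It Iy Dx. destruct HU as [_ Hsol]. destruct (Hsol y x Iy Dx) as [_ H].
  apply H; auto.
Qed.

Lemma vnorm_U t y x : I t -> I y -> vnorm (U t y x) = vnorm x.
Proof.
  intros It Iy. destruct HU as [[H _] _]. destruct (H t y It Iy) as [_ [Hiso _]].
  unfold vnorm. rewrite Hiso. reflexivity.
Qed.

Lemma U_diag t x : I t -> U t t x = x.
Proof. intros It. destruct HU as [[_ [_ [H _]]] _]. auto. Qed.

Lemma vnorm_phi t : s <= t <= T -> vnorm (phi t) = vnorm Psi.
Proof. intro Ht. apply vnorm_U; auto. apply in_I; auto. Qed.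

Lemma Hamil_cont P t x : I t -> (forall r, P r -> I r) -> vlim P (fun r => Hamil r x) t (Hamil t x).
Proof.
  intros It HP.
  apply vlim_le_bound with (fun r => rsum n (fun i => Rabs (f i r - f i t) * vnorm (Hop i x))).
  - intros r _ _. apply vnorm_Hsum_sub.
  - rewrite <- (rsum_const0 n). apply rlim_rsum. intros i Hin.
    rewrite <- (Rmult_0_l (vnorm (Hop i x))), <- Rabs_R0, <- (Rminus_diag (f i t)).
    apply rlim_mult; [|apply rlim_const]. apply rlim_abs.
    apply (rlim_plus _ _ _ _ _ _ (rdiffq_cont _ _ _ _ (rdiffq_rlim I P _ _ _ HP (f_deriv i Hin t It)))
             (rlim_const P (- f i t) t)).
Qed.

Section Pairing.
Variables (y : R) (xi : Hs).
Hypotheses (Iy : I y) (Dxi : D xi).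

Definition chi r := U r y xi.
Definition pairing r := Re (inner (chi r) (Hphi r)).
Definition pairing_deriv t := rsum n (fun i => fp i t * Re (inner (Hop i (chi t)) (phi t))).

(* Symmetry moves [H(t)] from [phi] onto [chi]; the two [-iH] terms of the derivative then
   cancel and only the derivatives of the coefficients [f_i] survive. *)
Lemma pairing_diffq_split t r : I t -> I r -> r <> t ->
  (pairing r - pairing t) / (r - t) =
  Re (inner (vdiffq chi t r) (Hphi r)) +
  rsum n (fun i => (f i r - f i t) / (r - t) * Re (inner (Hop i (chi t)) (phi r))) +
  Re (inner (Hamil t (chi t)) (vdiffq phi t r)).
Proof.
  intros It Ir Hr.
  assert (Dchi : D (chi t)) by (apply U_in_D; auto).
  assert (Dphi : forall r, I r -> D (phi r)) by (intros; apply U_in_D; auto).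
  assert (E1 : Re (inner (chi t) (Hphi r)) =
               rsum n (fun i => f i r * Re (inner (Hop i (chi t)) (phi r)))).
  { unfold Hphi. rewrite <- Hamil_symm; auto. apply Re_inner_Hsum_l. }
  assert (E2 : Re (inner (chi t) (Hphi t)) =
               rsum n (fun i => f i t * Re (inner (Hop i (chi t)) (phi r))) -
               (r - t) * Re (inner (Hamil t (chi t)) (vdiffq phi t r))).
  { unfold Hphi, vdiffq. rewrite <- Hamil_symm, Re_inner_scalR_r, Re_inner_sub_r; auto.
    unfold Hamil at 2. rewrite Re_inner_Hsum_l. field. lra. }
  assert (E3 : rsum n (fun i => (f i r - f i t) / (r - t) * Re (inner (Hop i (chi t)) (phi r))) =
               / (r - t) * (rsum n (fun i => f i r * Re (inner (Hop i (chi t)) (phi r))) -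
                            rsum n (fun i => f i t * Re (inner (Hop i (chi t)) (phi r))))).
  { rewrite <- rsum_minus, <- rsum_scal. apply rsum_ext. intros. unfold Rdiv. ring. }
  unfold vdiffq at 1. rewrite Re_inner_scalR_l, Re_inner_sub_l, E3, <- E1.
  unfold pairing at 2. rewrite E2. fold (pairing r). field. lra.
Qed.

Lemma pairing_has_deriv a b S : s <= a -> b <= T -> (forall r, a <= r <= b -> Hphi_norm r <= S) ->
  forall t, a <= t <= b ->
  rlim (fun r => a <= r <= b) (fun r => (pairing r - pairing t) / (r - t)) t (pairing_deriv t).
Proof.
  intros Ha Hb HS t Ht.
  set (P := fun r => a <= r <= b).
  assert (HPI : forall r, P r -> I r) by (intros r Pr; apply in_I; unfold P in Pr; lra).
  assert (It : I t) by (apply HPI; exact Ht).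
  assert (Dphi : forall r, I r -> D (phi r)) by (intros; apply U_in_D; auto).
  assert (Hchi' := vderiv_vlim I P chi t _ HPI (U_has_vderiv t y xi It Iy Dxi)).
  assert (Hphi' := vderiv_vlim I P phi t _ HPI (U_has_vderiv t s Psi It Is DPsi)).
  fold (chi t) in Hchi'. fold (phi t) in Hphi'.
  assert (Hphic : vlim P phi t (phi t)) by (eapply vdiffq_cont; apply Hphi').
  assert (HvS : forall r, P r -> r <> t -> Rabs (r - t) < 1 -> vnorm (Hphi r) <= S)
    by (intros r Pr _ _; apply HS; exact Pr).
  assert (Hweak : forall z, rlim P (fun r => Re (inner z (Hphi r))) t (Re (inner z (Hphi t)))).
  { apply (weak_lim_dense P Hphi t (Hphi t) S 1 D D_dense); auto. lra.
    intros z Dz. apply rlim_ext with (fun r => Re (inner (Hamil r z) (phi r))).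
    - intros r Pr _. unfold Hphi. rewrite Hamil_symm; auto.
    - unfold Hphi. rewrite <- Hamil_symm; auto. apply rlim_Re_inner; auto. apply Hamil_cont; auto. }
  apply rlim_ext with (fun r =>
    Re (inner (vdiffq chi t r) (Hphi r)) +
    rsum n (fun i => (f i r - f i t) / (r - t) * Re (inner (Hop i (chi t)) (phi r))) +
    Re (inner (Hamil t (chi t)) (vdiffq phi t r))).
  { intros r Pr Hr. symmetry. apply pairing_diffq_split; auto. }
  replace (pairing_deriv t) with
    (Re (inner (vscal (mkC 0 (-1)) (Hamil t (chi t))) (Hphi t)) + pairing_deriv t +
     Re (inner (Hamil t (chi t)) (vscal (mkC 0 (-1)) (Hamil t (phi t)))))
    by (rewrite Re_inner_scal_l, Re_inner_scal_r; unfold Hphi; simpl; ring).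
  apply rlim_plus; [apply rlim_plus|].
  - apply (rlim_Re_inner_bounded P _ Hphi t _ _ S 1); auto. lra.
  - apply rlim_rsum. intros i Hin. apply rlim_mult.
    + apply (rdiffq_rlim I); auto.
    + apply rlim_Re_inner; auto. apply vlim_const.
  - apply rlim_Re_inner; auto. apply vlim_const.
Qed.

End Pairing.

Variable K : nat -> R.
Hypothesis HK : forall i, (i < n)%nat -> 0 < K i /\
  forall x t, D x -> I t -> vnorm (Hop i x) <= K i * (vnorm (Hamil t x) + vnorm x).
Variable C1 : R.
Hypotheses (C1_ge0 : 0 <= C1)
  (C1_bound : forall t, s <= t <= T -> rsum n (fun i => Rabs (fp i t) * K i) <= C1).

Lemma pairing_deriv_bound y xi t : I y -> D xi -> s <= t <= T ->
  Rabs (pairing_deriv y xi t) <= vnorm xi * (Hphi_norm t + vnorm Psi) * C1.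
Proof.
  intros Iy Dxi Ht. assert (It : I t) by (apply in_I; auto).
  assert (Dphi : D (phi t)) by (apply U_in_D; auto).
  pose proof (vnorm_ge0 xi). pose proof (vnorm_ge0 Psi). pose proof (vnorm_ge0 (Hphi t)).
  unfold pairing_deriv. eapply Rle_trans. apply rsum_abs.
  apply Rle_trans with (rsum n (fun i => vnorm xi * (Hphi_norm t + vnorm Psi) * (Rabs (fp i t) * K i))).
  - apply rsum_le. intros i Hin. rewrite Rabs_mult, Hop_symm_inner; auto; [|apply U_in_D; auto].
    destruct (HK i Hin) as [HKp HKb]. specialize (HKb (phi t) t Dphi It).
    fold (Hphi t) (Hphi_norm t) in HKb. rewrite vnorm_phi in HKb; auto.
    pose proof (cauchy_schwarz_abs (chi y xi t) (Hop i (phi t))) as Hcs.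
    unfold chi in Hcs at 2. rewrite vnorm_U in Hcs; auto.
    pose proof (Rabs_pos (fp i t)). pose proof (vnorm_ge0 (Hop i (phi t))).
    apply Rle_trans with (Rabs (fp i t) * (vnorm xi * (K i * (Hphi_norm t + vnorm Psi)))).
    + apply Rmult_le_compat_l; auto. eapply Rle_trans. apply Hcs. apply Rmult_le_compat_l; auto.
    + right; ring.
  - rewrite rsum_scal. apply Rmult_le_compat_l; auto. unfold Hphi_norm. nra.
Qed.

Lemma pairing_increment_bound y xi a b S : I y -> D xi -> s <= a -> a <= b -> b <= T ->
  (forall r, a <= r <= b -> Hphi_norm r <= S) ->
  Rabs (pairing y xi b - pairing y xi a) <= vnorm xi * (S + vnorm Psi) * C1 * (b - a).
Proof.
  intros Iy Dxi Ha Hab Hb HS.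
  apply (mean_value_abs_le _ (pairing_deriv y xi)); auto.
  - intros t Ht. apply (pairing_has_deriv y xi Iy Dxi a b S); auto.
  - intros t Ht. eapply Rle_trans. apply pairing_deriv_bound; auto. lra.
    apply Rmult_le_compat_r; auto. apply Rmult_le_compat_l. apply vnorm_ge0.
    apply Rplus_le_compat_r. apply HS; auto.
Qed.

(* Testing [H(y) phi(y)] against [xi] in [D] through [pairing y xi], which equals
   [Re <xi, H(y) phi(y)>] at [y] and is at most [|xi| |H(x) phi(x)|] at [x]. *)
Lemma Hphi_norm_step a b S x y : s <= a -> a <= b -> b <= T ->
  (forall r, a <= r <= b -> Hphi_norm r <= S) -> a <= x <= b -> a <= y <= b ->
  Hphi_norm y <= Hphi_norm x + C1 * (S + vnorm Psi) * Rabs (y - x).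
Proof.
  intros Ha Hab Hb HS Hx Hy.
  assert (Iy : I y) by (apply in_I; lra). assert (Ix : I x) by (apply in_I; lra).
  assert (HS0 : 0 <= S) by (eapply Rle_trans; [|apply (HS x Hx)]; apply vnorm_ge0).
  pose proof (vnorm_ge0 Psi). pose proof (Rabs_pos (y - x)).
  apply (dense_norm_bound D). apply D_dense.
  { apply Rplus_le_le_0_compat. apply vnorm_ge0. apply Rmult_le_pos; [apply Rmult_le_pos|]; lra. }
  intros z Dz. pose proof (vnorm_ge0 z).
  assert (Hinc : Rabs (pairing y z y - pairing y z x) <= vnorm z * (S + vnorm Psi) * C1 * Rabs (y - x)).
  { destruct (Rle_or_lt x y).
    - rewrite (Rabs_right (y - x)) by lra.
      apply pairing_increment_bound; auto; try lra. intros r Hr; apply HS; lra.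
    - rewrite (Rabs_left (y - x)), <- Rabs_Ropp by lra.
      replace (- (pairing y z y - pairing y z x)) with (pairing y z x - pairing y z y) by ring.
      replace (- (y - x)) with (x - y) by ring.
      apply pairing_increment_bound; auto; try lra. intros r Hr; apply HS; lra. }
  assert (Hy' : pairing y z y = Re (inner z (Hphi y))) by (unfold pairing, chi; rewrite U_diag; auto).
  assert (Hx' : pairing y z x <= vnorm z * Hphi_norm x).
  { unfold pairing. eapply Rle_trans. apply cauchy_schwarz. unfold chi. rewrite vnorm_U; auto.
    right; reflexivity. }
  apply Rabs_le_inv in Hinc. rewrite <- Hy'. nra.
Qed.

Definition short_len := / (2 * (C1 + 1)).

Lemma short_len_pos : 0 < short_len.
Proof. unfold short_len. apply Rinv_0_lt_compat. lra. Qed.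

Lemma C1_short_len : C1 * short_len <= / 2.
Proof.
  unfold short_len. apply Rmult_le_reg_r with (2 * (C1 + 1)). lra.
  rewrite Rmult_assoc, Rinv_l by lra. field_simplify; lra.
Qed.

(* On an interval of length [short_len] a bound [S] improves to [2 |H(x) phi(x)| + |Psi|]
   (the step lemma contracts it by the factor 1/2), provided some bound exists. *)
Lemma Hphi_norm_short_le a b x : s <= a -> a <= b -> b <= T -> b - a <= short_len ->
  (exists S, forall r, a <= r <= b -> Hphi_norm r <= S) -> a <= x <= b ->
  forall y, a <= y <= b -> Hphi_norm y <= 2 * Hphi_norm x + vnorm Psi.
Proof.
  intros Ha Hab Hb Hl HS Hx.
  replace (2 * Hphi_norm x + vnorm Psi) with (2 * (Hphi_norm x + vnorm Psi / 2)) by field.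
  apply (upper_bound_contraction Hphi_norm (fun r => a <= r <= b)); auto.
  intros S' HS' r Hr.
  pose proof (Hphi_norm_step a b S' x r Ha Hab Hb HS' Hx Hr).
  assert (HS0 : 0 <= S') by (eapply Rle_trans; [|apply (HS' x Hx)]; apply vnorm_ge0).
  assert (Rabs (r - x) <= short_len) by (apply Rabs_le; split; lra).
  pose proof C1_short_len. pose proof (vnorm_ge0 Psi). pose proof (Rabs_pos (r - x)).
  assert (C1 * (S' + vnorm Psi) * Rabs (r - x) <= (S' + vnorm Psi) / 2).
  { apply Rle_trans with ((S' + vnorm Psi) * (C1 * short_len)).
    - rewrite (Rmult_comm C1), Rmult_assoc. apply Rmult_le_compat_l. lra.
      apply Rmult_le_compat_l; auto.
    - apply Rle_trans with ((S' + vnorm Psi) * / 2). apply Rmult_le_compat_l; lra. right; field. }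
  lra.
Qed.

Definition locally_bounded t := locally_bounded_at (fun r => s <= r <= T) Hphi_norm t.

Lemma Hphi_norm_short_compare a b : s <= a -> a < b -> b <= T -> b - a <= short_len ->
  (forall r, a < r < b -> locally_bounded r) ->
  Hphi_norm b <= 2 * Hphi_norm a + vnorm Psi /\ Hphi_norm a <= 2 * Hphi_norm b + vnorm Psi.
Proof.
  intros Ha Hab Hb Hl HL. set (m := (a + b) / 2).
  assert (Hin : forall r, a < r < b -> Hphi_norm r <= 2 * Hphi_norm m + vnorm Psi).
  { intros r Hr. set (lo := Rmin r m). set (hi := Rmax r m).
    assert (Hlo : a < lo) by (apply Rmin_glb_lt; unfold m; lra).
    assert (Hhi : hi < b) by (apply Rmax_lub_lt; unfold m; lra).
    assert (Hm1 : lo <= m <= hi) by (split; [apply Rmin_r | apply Rmax_r]).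
    assert (Hr1 : lo <= r <= hi) by (split; [apply Rmin_l | apply Rmax_l]).
    apply (Hphi_norm_short_le lo hi m); auto; try lra.
    apply locally_bounded_compact. lra. intros t Ht.
    destruct (HL t ltac:(lra)) as [rho [S [Hrho HS]]].
    exists rho, S. split; auto. intros w Hw Hwt. apply HS; auto. lra. }
  assert (Hbd : exists S, forall r, a <= r <= b -> Hphi_norm r <= S).
  { exists (Rmax (2 * Hphi_norm m + vnorm Psi) (Rmax (Hphi_norm a) (Hphi_norm b))). intros r Hr.
    destruct (Req_dec r a) as [->|Ha']. eapply Rle_trans; [|apply Rmax_r]. apply Rmax_l.
    destruct (Req_dec r b) as [->|Hb']. eapply Rle_trans; [|apply Rmax_r]. apply Rmax_r.
    eapply Rle_trans; [|apply Rmax_l]. apply Hin. lra. }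
  split; [apply (Hphi_norm_short_le a b a) | apply (Hphi_norm_short_le a b b)]; auto; lra.
Qed.

Definition bad t := s <= t <= T /\ ~ locally_bounded t.

Lemma bad_closed : closed_in s T bad.
Proof.
  intros x Hx H. split; auto. intros [rho [S [Hrho HS]]].
  destruct (H (rho / 2) ltac:(lra)) as [y [[Hy Hny] Hyx]]. apply Hny.
  exists (rho / 2), S. split. lra. intros r Hr Hry. apply HS; auto.
  apply Rabs_def2 in Hyx. apply Rabs_def2 in Hry. apply Rabs_def1; lra.
Qed.

(* Lower semicontinuity: [t |-> Re <H(t) z, phi(t)>] is continuous for [z] in [D]. *)
Lemma Hphi_norm_sublevel_closed N : closed_in s T (fun t => s <= t <= T /\ Hphi_norm t <= N).
Proof.
  intros x Hx H. split; auto.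
  assert (HN : 0 <= N).
  { destruct (H 1 Rlt_0_1) as [y [[_ Hy] _]]. eapply Rle_trans; [|apply Hy]. apply vnorm_ge0. }
  apply (dense_norm_bound D); auto. apply D_dense. intros z Dz.
  apply Rnot_lt_le. intro Hc.
  set (P := fun r => s <= r <= T).
  assert (HPI : forall r, P r -> I r) by (intros; apply in_I; auto).
  assert (Ix : I x) by (apply in_I; auto).
  assert (Hl : rlim P (fun r => Re (inner (Hamil r z) (phi r))) x (Re (inner (Hamil x z) (phi x)))).
  { apply rlim_Re_inner. apply Hamil_cont; auto.
    eapply vdiffq_cont. apply (vderiv_vlim I P phi x _ HPI (U_has_vderiv x s Psi Ix Is DPsi)). }
  assert (Hsym : forall r, I r -> Re (inner (Hamil r z) (phi r)) = Re (inner z (Hphi r)))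
    by (intros r Ir; unfold Hphi; rewrite Hamil_symm; auto; apply U_in_D; auto).
  rewrite Hsym in Hl by auto.
  destruct (Hl (Re (inner z (Hphi x)) - vnorm z * N) ltac:(lra)) as [d [Hd Hd']].
  destruct (H d Hd) as [y [[Hy HMy] Hyx]].
  assert (Hle : Re (inner z (Hphi y)) <= vnorm z * N).
  { eapply Rle_trans. apply cauchy_schwarz. apply Rmult_le_compat_l. apply vnorm_ge0. auto. }
  destruct (Req_dec y x) as [->|Hne]. lra.
  specialize (Hd' y Hy Hne Hyx). rewrite Hsym in Hd' by (apply in_I; auto).
  apply Rabs_def2 in Hd'. lra.
Qed.

(* Every point [r] near [x0] is controlled by the bad point closest to [r] between [r] and
   [x0], since all points strictly in between are locally bounded. *)
Lemma not_bad_of_bounded_on_bad p q N x0 :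
  (forall x, bad x -> p < x < q -> Hphi_norm x <= N) -> p < x0 < q -> ~ bad x0.
Proof.
  intros HE Hx0 [Hx0J Hnl]. apply Hnl.
  assert (HN : 0 <= N) by (eapply Rle_trans; [|apply (HE x0 (conj Hx0J Hnl) Hx0)]; apply vnorm_ge0).
  pose proof short_len_pos. pose proof (vnorm_ge0 Psi).
  pose proof (Rmin_l (Rmin (x0 - p) (q - x0)) short_len).
  pose proof (Rmin_r (Rmin (x0 - p) (q - x0)) short_len).
  pose proof (Rmin_l (x0 - p) (q - x0)). pose proof (Rmin_r (x0 - p) (q - x0)).
  set (rho := Rmin (Rmin (x0 - p) (q - x0)) short_len) in *.
  exists rho, (2 * N + vnorm Psi). split; [repeat apply Rmin_pos; lra|].
  intros r Hr Hrx. apply Rabs_def2 in Hrx.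
  destruct (classic (bad r)) as [Br|Br]. { pose proof (HE r Br ltac:(lra)). lra. }
  assert (Hlb : forall w, s <= w <= T -> ~ bad w -> locally_bounded w)
    by (intros w Hw Bw; apply NNPP; intro; apply Bw; split; auto).
  destruct (Rle_or_lt r x0) as [Hrx0|Hrx0].
  - destruct (closed_in_first_after bad s T x0 r bad_closed ltac:(lra) ltac:(lra) Hrx0
                (conj Hx0J Hnl) Br) as [a [Ba [Ha Hfree]]].
    destruct (Hphi_norm_short_compare r a) as [_ Hra]; try lra.
    { intros w Hw. apply Hlb. lra. apply Hfree. lra. }
    pose proof (HE a Ba ltac:(lra)). lra.
  - destruct (closed_in_last_before bad s T x0 r bad_closed ltac:(lra) ltac:(lra) ltac:(lra)
                (conj Hx0J Hnl) Br) as [a [Ba [Ha Hfree]]].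
    destruct (Hphi_norm_short_compare a r) as [Har _]; try lra.
    { intros w Hw. apply Hlb. lra. apply Hfree. lra. }
    pose proof (HE a Ba ltac:(lra)). lra.
Qed.

(* Baire: the closed set of bad points is covered by the closed sublevel sets of the norm. *)
Lemma Hphi_norm_locally_bounded t : s <= t <= T -> locally_bounded t.
Proof.
  intros Ht. apply NNPP. intro Hnb.
  destruct (baire_interval bad (fun N t => s <= t <= T /\ Hphi_norm t <= INR N) s T)
    as [N [p [q [[x0 [Bx0 Hx0]] HE]]]].
  - intros x [Hx _]; auto.
  - apply bad_closed.
  - intro N. apply Hphi_norm_sublevel_closed.
  - intros x [Hx _]. destruct (archimed (Hphi_norm x)) as [Har _].
    exists (Z.to_nat (up (Hphi_norm x))). split; auto.
    pose proof (vnorm_ge0 (Hphi x)).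
    rewrite INR_IZR_INZ, Z2Nat.id. lra. apply le_IZR. unfold Hphi_norm in *. lra.
  - exists t. split; auto.
  - apply (not_bad_of_bounded_on_bad p q (INR N) x0 (fun x Bx Hx => proj2 (HE x Bx Hx)) Hx0 Bx0).
Qed.

Lemma Hphi_norm_bounded : exists M, forall t, s <= t <= T -> Hphi_norm t <= M.
Proof. apply locally_bounded_compact. lra. apply Hphi_norm_locally_bounded. Qed.

End PropagatedState.

(** * Comparison of two propagators *)

Lemma choice_below {A : Type} (a0 : A) (n : nat) (P : nat -> A -> Prop) :
  (forall i, (i < n)%nat -> exists x, P i x) ->
  exists F : nat -> A, forall i, (i < n)%nat -> P i (F i).
Proof.
  intros H. exists (fun i => epsilon (inhabits a0) (fun x => (i < n)%nat -> P i x)).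
  intros i Hi. apply (epsilon_spec (inhabits a0) (fun x => (i < n)%nat -> P i x)); auto.
  destruct (H i Hi) as [x Hx]. exists x. auto.
Qed.

Lemma propagated_Hamil_bounded (Hs : HilbertSpace) (n : nat) (Hop : nat -> Hs -> Hs)
  (D : Hs -> Prop) (I : R -> Prop) (f : nat -> R -> R) (U : R -> R -> Hs -> Hs) :
  (forall i, (i < n)%nat -> symmetric_op Hs D (Hop i)) ->
  is_interval I -> hyp_i Hs I D n f Hop -> (forall i, (i < n)%nat -> C1_on I (f i)) ->
  hyp_iii Hs I D n f Hop -> propagator_of Hs I D n f Hop U ->
  forall Psi s T, D Psi -> I s -> I T -> s < T ->
  exists M, forall t, s <= t <= T -> vnorm (Hsum Hs n f Hop t (U t s Psi)) <= M.
Proof.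
  intros Hsym HI Hself HC1 Hiii HU Psi s T DPsi Is IT HsT.
  destruct (choice_below (fun _ : R => 0) n _ HC1) as [fp Hfp].
  destruct (choice_below 0 n _ Hiii) as [K HK].
  destruct (locally_bounded_compact (fun t => rsum n (fun i => Rabs (fp i t) * K i)) s T)
    as [C HC]; [lra| |].
  { intros t Ht. apply locally_bounded_at_rsum. intros i Hin.
    destruct (proj2 (Hfp i Hin) t (in_I I HI s T Is IT t Ht) 1 Rlt_0_1) as [d [Hd Hd']].
    exists d, ((Rabs (fp i t) + 1) * K i). split; auto. intros r Hr Hrt.
    specialize (Hd' r (in_I I HI s T Is IT r Hr) Hrt).
    apply Rmult_le_compat_r. left; apply (HK i Hin).
    pose proof (Rabs_triang_inv (fp i r) (fp i t)). lra. }
  apply (Hphi_norm_bounded Hs n Hop D I f U Hsym HI Hself HU fp (fun i Hin => proj1 (Hfp i Hin))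
           Psi s T DPsi Is IT HsT K HK (Rmax C 0) (Rmax_r C 0)).
  intros t Ht. eapply Rle_trans. apply HC; auto. apply Rmax_l.
Qed.

Section Comparison.
Variables (Hs : HilbertSpace) (n : nat) (Hop : nat -> Hs -> Hs)
  (D : Hs -> Prop) (I : R -> Prop) (f g : nat -> R -> R) (U1 U2 : R -> R -> Hs -> Hs).
Hypotheses (I_interval : is_interval I) (Hself_g : hyp_i Hs I D n g Hop)
  (HU1 : propagator_of Hs I D n f Hop U1) (HU2 : propagator_of Hs I D n g Hop U2).
Variable K : nat -> R.
Hypothesis HK : forall i, (i < n)%nat -> 0 < K i /\
  forall x t, D x -> I t -> vnorm (Hop i x) <= K i * (vnorm (Hsum Hs n f Hop t x) + vnorm x).
Variables (Psi : Hs) (s T M c : R).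
Hypotheses (DPsi : D Psi) (Is : I s) (IT : I T) (HsT : s < T)
  (HM : forall t, s <= t <= T -> vnorm (Hsum Hs n f Hop t (U1 t s Psi)) <= M)
  (Hc : forall i t, (i < n)%nat -> I t -> Rabs (f i t - g i t) <= c).

Definition diff t := vsub (U1 t s Psi) (U2 t s Psi).

Definition diff_deriv t := vsub (vscal (mkC 0 (-1)) (Hsum Hs n f Hop t (U1 t s Psi)))
                                (vscal (mkC 0 (-1)) (Hsum Hs n g Hop t (U2 t s Psi))).

Lemma vnorm2_diff_has_deriv t : s <= t <= T ->
  rlim (fun r => s <= r <= T) (fun r => (vnorm2 (diff r) - vnorm2 (diff t)) / (r - t)) t
       (2 * Re (inner (diff t) (diff_deriv t))).
Proof.
  intros Ht. assert (HJ : forall r, s <= r <= T -> I r) by apply (in_I I I_interval s T Is IT).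
  apply vnorm2_diffq.
  apply vlim_ext with (fun r => vsub (vdiffq (fun r => U1 r s Psi) t r) (vdiffq (fun r => U2 r s Psi) t r)).
  { intro r. unfold vdiffq, diff. rewrite <- vscal_sub, vsub_sub4. reflexivity. }
  apply vlim_sub; apply (vderiv_vlim I); auto.
  - apply (U_has_vderiv Hs n Hop D I f U1 HU1); auto.
  - apply (U_has_vderiv Hs n Hop D I g U2 HU2); auto.
Qed.

(* [H_g] is symmetric, so [Im <diff, H_g diff> = 0]: only [(H_f - H_g) phi_1] contributes. *)
Lemma diff_deriv_bound t : s <= t <= T ->
  2 * Re (inner (diff t) (diff_deriv t)) <= c * (4 * vnorm Psi * rsum n K * (M + vnorm Psi)).
Proof.
  intros Ht. assert (It : I t) by (apply (in_I I I_interval s T); auto).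
  set (phi1 := U1 t s Psi). set (phi2 := U2 t s Psi).
  assert (D1 : D phi1) by (apply (U_in_D Hs n Hop D I f U1 HU1); auto).
  assert (D2 : D phi2) by (apply (U_in_D Hs n Hop D I g U2 HU2); auto).
  destruct (Hself_g t It) as [[[_ [Hadd Hsc]] [_ [Hlin _]]] _].
  assert (Ddiff : D (diff t)) by (unfold diff, vsub; apply Hadd; auto; rewrite vopp_scal; apply Hsc; auto).
  assert (Hsymd : Im (inner (diff t) (Hsum Hs n g Hop t (diff t))) = 0).
  { pose proof (Im_inner_sym (diff t) (Hsum Hs n g Hop t (diff t))) as E.
    pose proof (Hamil_symm Hs n Hop D I g Hself_g t (diff t) (diff t) It Ddiff Ddiff) as Hsym.
    unfold Hamil in Hsym. rewrite Hsym in E. lra. }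
  unfold diff at 2, vsub in Hsymd.
  rewrite vadd_comm, vopp_scal, Hlin, Im_inner_add_r, Im_inner_scal_r in Hsymd;
    auto. simpl in Hsymd. fold phi1 phi2 in Hsymd.
  set (w := vsub (Hsum Hs n f Hop t phi1) (Hsum Hs n g Hop t phi1)).
  assert (E : Re (inner (diff t) (diff_deriv t)) = Im (inner (diff t) w)).
  { unfold diff_deriv, w. rewrite Re_inner_sub_r, !Re_inner_scal_r, Im_inner_sub_r. simpl.
    fold phi1 phi2. lra. }
  assert (Hdn : vnorm (diff t) <= 2 * vnorm Psi).
  { unfold diff. eapply Rle_trans. apply vnorm_sub_le.
    rewrite (vnorm_U Hs n Hop D I f U1 HU1), (vnorm_U Hs n Hop D I g U2 HU2); auto. lra. }
  assert (HM0 : 0 <= M) by (eapply Rle_trans; [|apply (HM t Ht)]; apply vnorm_ge0).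
  assert (Hwn : vnorm w <= c * rsum n K * (M + vnorm Psi)).
  { unfold w. eapply Rle_trans. apply vnorm_Hsum_sub.
    rewrite Rmult_assoc, (Rmult_comm (rsum n K)), <- rsum_scal, <- rsum_scal.
    apply rsum_le. intros i Hin. destruct (HK i Hin) as [HKi HKb].
    specialize (HKb phi1 t D1 It). unfold phi1 in HKb at 3.
    rewrite (vnorm_U Hs n Hop D I f U1 HU1) in HKb; auto.
    pose proof (HM t Ht). fold phi1 in H.
    apply Rmult_le_compat; auto using Rabs_pos, vnorm_ge0.
    eapply Rle_trans. apply HKb. rewrite Rmult_comm. apply Rmult_le_compat_r; lra. }
  pose proof (cauchy_schwarz_Im (diff t) w) as HIm. apply Rabs_le_inv in HIm.
  pose proof (vnorm_ge0 (diff t)). pose proof (vnorm_ge0 w).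
  assert (vnorm (diff t) * vnorm w <= (2 * vnorm Psi) * (c * rsum n K * (M + vnorm Psi)))
    by (apply Rmult_le_compat; auto).
  nra.
Qed.

Lemma vnorm2_diff_le :
  vnorm2 (vsub (U1 T s Psi) (U2 T s Psi)) <=
  c * (4 * vnorm Psi * rsum n K * (M + vnorm Psi)) * (T - s).
Proof.
  pose proof (mean_value_le (fun r => vnorm2 (diff r)) (fun t => 2 * Re (inner (diff t) (diff_deriv t)))
                s T _ ltac:(lra) vnorm2_diff_has_deriv diff_deriv_bound) as H.
  unfold diff in H at 2. rewrite (U_diag Hs n Hop D I f U1 HU1), (U_diag Hs n Hop D I g U2 HU2),
    vsub_diag, vnorm2_zero, Rminus_0_r in H by auto.
  exact H.
Qed.

End Comparison.

Theorem theorem2 (Hs : HilbertSpace) (n : nat) (Hop : nat -> Hs -> Hs)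
  (D : Hs -> Prop) (I : R -> Prop) (f : nat -> R -> R)
  (U1 : R -> R -> Hs -> Hs) :
  (forall i, (i < n)%nat -> symmetric_op Hs D (Hop i)) ->
  is_interval I ->
  hyp_i Hs I D n f Hop ->
  (forall i, (i < n)%nat -> C1_on I (f i)) ->
  hyp_iii Hs I D n f Hop ->
  propagator_of Hs I D n f Hop U1 ->
  forall (Psi : Hs) (s T eps : R),
    D Psi -> I s -> I T -> s < T -> 0 < eps ->
    exists delta, 0 < delta /\
      forall (g : nat -> R -> R) (U2 : R -> R -> Hs -> Hs),
        hyp_i Hs I D n g Hop ->
        (forall i, (i < n)%nat -> C1_on I (g i)) ->
        hyp_iii Hs I D n g Hop ->
        propagator_of Hs I D n g Hop U2 ->
        sup_close I n f g delta ->
        vnorm (vsub (U1 T s Psi) (U2 T s Psi)) < eps.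
Proof.
  intros Hsym HI Hself HC1 Hiii HU1 Psi s T eps DPsi Is IT HsT Heps.
  destruct (propagated_Hamil_bounded Hs n Hop D I f U1 Hsym HI Hself HC1 Hiii HU1 Psi s T DPsi Is IT HsT)
    as [M HM].
  destruct (choice_below 0 n _ Hiii) as [K HK].
  set (A := 4 * vnorm Psi * rsum n K * (M + vnorm Psi)).
  assert (HA : 0 <= A).
  { pose proof (vnorm_ge0 Psi).
    pose proof (rsum_nonneg n K (fun i Hi => Rlt_le _ _ (proj1 (HK i Hi)))).
    assert (0 <= M) by (eapply Rle_trans; [|apply (HM s)]; [apply vnorm_ge0 | lra]).
    unfold A. apply Rmult_le_pos; [apply Rmult_le_pos|]; lra. }
  exists (eps * eps / (A * (T - s) + 1)). split; [apply Rdiv_lt_0_compat; nra|].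
  intros g U2 Hself_g _ _ HU2 [c [Hcd Hc]].
  apply vnorm_lt; auto.
  eapply Rle_lt_trans.
  { apply (vnorm2_diff_le Hs n Hop D I f g U1 U2 HI Hself_g HU1 HU2 K HK Psi s T M c); auto. }
  fold A. set (delta := eps * eps / (A * (T - s) + 1)) in *.
  assert (Hdelta : delta * (A * (T - s) + 1) = eps * eps) by (unfold delta; field; nra).
  assert (0 <= A * (T - s)) by nra.
  assert (0 < delta) by (unfold delta; apply Rdiv_lt_0_compat; nra).
  assert (c * (A * (T - s)) <= delta * (A * (T - s))) by (apply Rmult_le_compat_r; lra).
  rewrite Rmult_assoc. nra.
Qed.
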